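(* There exist sequences $\{a_n\}_{n\ge1}\subset\mathbb C$, $\{\epsilon_n\}_{n\ge1}$ and $\{R_n\}_{n\ge1}$ of positive reals with $R_{n-1}<|a_n|<R_n$, together with a strictly decreasing sequence $\{\delta_n\}_{n\ge0}$ of positive reals with $\delta_0=1/4$, such that for every $n\ge1$, every holomorphic map $h\colon\overline{\mathbb C}\setminus\gamma_n^{-1}(\infty_2)\to\mathbb C^2$ with $\sup_{K_n}|\gamma_n-h|<\delta_n$ is an embedding on $K_{n-1}$, and $$\sup_{\overline{B_j(1/2)}}|f_n-\mathrm{id}|<\delta_j\cdot\frac1{2^{j+n}}\qquad\text{for all }0\le j<n.$$
   Context: $\overline{\mathbb C^2}=\mathbb C^2\cup\{\infty_2\}$. Set $D_n=\{|z|<R_n\}\subset\mathbb C$, $B_n=\overline D_n\times\overline D_n$ for $n\ge1$, and $B_0=\{(0,0)\}$. For $B\subset\mathbb C^2$ and $\alpha>0$, $B(\alpha)=\{z\in\mathbb C^2:\operatorname{dist}(z,B)<\alpha\}$ (Euclidean distance). Let $g_n(z)=\epsilon_n/(z-a_n)$, $f_n(x,y)=(x,y+g_n(x))$ for $n$ odd and $f_n(x,y)=(x+g_n(y),y)$ for $n$ even. Let $\gamma_n(z)=f_n\circ\cdots\circ f_1(z,0)$ for $z\in\mathbb C$, $\gamma_n(\infty)=\infty_2$, $K_n=\gamma_n^{-1}(B_n)\subset\overline{\mathbb C}$ for $n\ge1$, and $K_0=\emptyset$. Norms $|\cdot|$ on $\mathbb C^2$ are Euclidean. *)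

From Stdlib Require Import Reals.
From Coquelicot Require Import Coquelicot.
Open Scope R_scope.

Definition C2 : Type := (C * C)%type.

Definition norm2 (p : C2) : R :=
  sqrt (Cmod (fst p) ^ 2 + Cmod (snd p) ^ 2).

Definition sub2 (p q : C2) : C2 := (Cminus (fst p) (fst q), Cminus (snd p) (snd q)).

Definition Ceqb (u v : C) : bool :=
  if Req_EM_T (fst u) (fst v) then
    if Req_EM_T (snd u) (snd v) then true else false
  else false.

Definition gfun (eps : R) (a : C) (z : C) : C := Cdiv (RtoC eps) (Cminus z a).

(* f_n on C^2 with its singular line; [None] encodes the value infinity_2
   (the point z of the singular line is sent to infinity_2).
   n odd : (x,y) |-> (x, y + g_n(x));  n even : (x,y) |-> (x + g_n(y), y). *)
Definition fmap (n : nat) (a : C) (eps : R) (p : C2) : option C2 :=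
  let (x, y) := p in
  if Nat.odd n then
    (if Ceqb x a then None else Some (x, Cplus y (gfun eps a x)))
  else
    (if Ceqb y a then None else Some (Cplus x (gfun eps a y), y)).

(* gamma_n(z) = f_n o ... o f_1 (z, 0), for z in C, as a map into
   C^2 u {infinity_2} (None = infinity_2); gamma_n(infinity) = infinity_2
   is implicit: the point infinity of the Riemann sphere is never in K_n
   and always in gamma_n^{-1}(infinity_2). *)
Fixpoint gamma (a : nat -> C) (eps : nat -> R) (n : nat) (z : C) : option C2 :=
  match n with
  | O => Some (z, RtoC 0)
  | S m => match gamma a eps m z with
           | None => None
           | Some p => fmap (S m) (a (S m)) (eps (S m)) p
           end
  end.

Definition inB (Rs : nat -> R) (n : nat) (p : C2) : Prop :=
  match n with
  | O => p = (RtoC 0, RtoC 0)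
  | S _ => Cmod (fst p) <= Rs n /\ Cmod (snd p) <= Rs n
  end.

Definition inBnbhd (Rs : nat -> R) (n : nat) (alpha : R) (z : C2) : Prop :=
  exists b, inB Rs n b /\ norm2 (sub2 z b) < alpha.

Definition closure2 (S : C2 -> Prop) (z : C2) : Prop :=
  forall r, 0 < r -> exists w, S w /\ norm2 (sub2 z w) < r.

(* K_0 = empty, K_n = gamma_n^{-1}(B_n) (a subset of C since
   gamma_n(infinity) = infinity_2 is not in B_n) *)
Definition inK (a : nat -> C) (eps : nat -> R) (Rs : nat -> R) (n : nat) (z : C) : Prop :=
  match n with
  | O => False
  | S _ => exists p, gamma a eps n z = Some p /\ inB Rs n p
  end.

(* h : Cbar \ gamma_n^{-1}(infinity_2) -> C^2 holomorphic, i.e. both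
   coordinates complex differentiable at every z in C with gamma_n(z) finite *)
Definition holo_off_poles (a : nat -> C) (eps : nat -> R) (n : nat) (h : C -> C2) : Prop :=
  forall z : C, gamma a eps n z <> None ->
    ex_derive (fun w : C => fst (h w)) z /\ ex_derive (fun w : C => snd (h w)) z.

Definition embedding_on (K : C -> Prop) (h : C -> C2) : Prop :=
  (forall z w, K z -> K w -> h z = h w -> z = w) /\
  (forall z, K z -> exists l1 l2 : C,
      is_derive (fun w : C => fst (h w)) z l1 /\
      is_derive (fun w : C => snd (h w)) z l2 /\
      (l1, l2) <> (RtoC 0, RtoC 0)).

(* Take a_n = 4n - 2 and R_n = 4n. If some shear moved a point z of K_m by much, one
   coordinate of its orbit would leave the bidisk of radius 4m + 1 while the other sits next
   to a pole, and then no later shear could bring it back, contradicting gamma_m(z) in B_m.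
   Hence the orbits of points of K_m keep a definite margin from the poles. Consequently each
   shear is a Lipschitz perturbation of the identity along these orbits, which gives an
   inverse Lipschitz bound for gamma_n on K_n, and a fixed neighbourhood of K_{n-1} lies in
   K_n. If h is close to gamma_n on K_n, the Cauchy estimate on that neighbourhood (derived
   from Goursat's theorem for rectangles) makes h - gamma_n small in C^1 on K_{n-1}, so h
   inherits injectivity and immersivity there. It remains to choose eps_n small compared with
   delta_{n-1}, and delta_n small compared with the resulting margins. *)

From Stdlib Require Import Reals.
From Coquelicot Require Import Coquelicot.
Open Scope R_scope.
From Stdlib Require Import Lra Lia Classical ClassicalEpsilon.

Local Notation CR := C_R_CompleteNormedModule.

Lemma Rabs_fst_le_Cmod (c : C) : Rabs (fst c) <= Cmod c.
Proof. eapply Rle_trans; [apply Rmax_l | apply Rmax_Cmod]. Qed.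

Lemma Rabs_snd_le_Cmod (c : C) : Rabs (snd c) <= Cmod c.
Proof. eapply Rle_trans; [apply Rmax_r | apply Rmax_Cmod]. Qed.

Lemma Cmod_le_Rabs_fst_snd (c : C) : Cmod c <= Rabs (fst c) + Rabs (snd c).
Proof.
  destruct c as [a b]; unfold Cmod; simpl.
  pose proof (Rabs_pos a); pose proof (Rabs_pos b).
  apply Rsqr_incr_0_var; [|lra].
  unfold Rsqr. rewrite sqrt_sqrt by nra.
  assert (Rabs a * Rabs a = a * a) by (rewrite <- Rabs_mult; apply Rabs_pos_eq; nra).
  assert (Rabs b * Rabs b = b * b) by (rewrite <- Rabs_mult; apply Rabs_pos_eq; nra).
  nra.
Qed.

Lemma Cmod_pair_minus_le (x y x' y' : R) :
  Cmod ((x, y) - (x', y'))%C <= Rabs (x - x') + Rabs (y - y').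
Proof. eapply Rle_trans. apply Cmod_le_Rabs_fst_snd. simpl. unfold Rminus. lra. Qed.

Lemma Cmod_minus_sym (u v : C) : Cmod (u - v) = Cmod (v - u).
Proof. replace (u - v)%C with (- (v - u))%C by ring. apply Cmod_opp. Qed.

Lemma Cmod_minus_triangle (u v w : C) : Cmod (u - w) <= Cmod (u - v) + Cmod (v - w).
Proof. replace (u - w)%C with ((u - v) + (v - w))%C by ring. apply Cmod_triangle. Qed.

Lemma Cmod_minus_diag (u : C) : Cmod (u - u) = 0.
Proof. replace (u - u)%C with (RtoC 0) by ring. apply Cmod_0. Qed.

Lemma Cmod_minus_le (u v : C) : Cmod (u - v) <= Cmod u + Cmod v.
Proof. unfold Cminus. rewrite <- (Cmod_opp v). apply Cmod_triangle. Qed.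

Lemma Cmod_minus_ge (u v : C) : Cmod u - Cmod v <= Cmod (u - v).
Proof. pose proof (Cmod_triangle (u - v) v) as T. replace (u - v + v)%C with u in T by ring. lra. Qed.

Lemma Cmod_plus_ge (u v : C) : Cmod u - Cmod v <= Cmod (u + v).
Proof. replace (u + v)%C with (u - - v)%C by ring. rewrite <- (Cmod_opp v). apply Cmod_minus_ge. Qed.

Lemma Cmod_gt_0 (c : C) : c <> RtoC 0 -> 0 < Cmod c.
Proof.
  intros H. destruct (Rle_lt_or_eq_dec 0 (Cmod c) (Cmod_ge_0 c)) as [|E]; auto.
  exfalso. apply H, Cmod_eq_0. auto.
Qed.

Lemma Cminus_neq_0 (u v : C) : u <> v -> (u - v)%C <> RtoC 0.
Proof. intros H E. apply H. replace u with ((u - v) + v)%C by ring. rewrite E. ring. Qed.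

Lemma Cmod_minus_gt_0 (u v : C) : u <> v -> 0 < Cmod (u - v).
Proof. intros H. apply Cmod_gt_0, Cminus_neq_0, H. Qed.

Lemma Cmod_Ci : Cmod Ci = 1.
Proof. unfold Cmod, Ci; simpl. replace (0 * (0 * 1) + 1 * (1 * 1)) with 1 by ring. apply sqrt_1. Qed.

Lemma norm_C_R (x : C) : @norm R_AbsRing C_R_NormedModule x = Cmod x.
Proof.
  destruct x as [a b]. unfold norm; simpl. unfold prod_norm, Cmod; simpl.
  unfold norm; simpl. unfold abs; simpl.
  rewrite !Rmult_1_r, <- !Rabs_mult, !Rabs_pos_eq by nra. reflexivity.
Qed.

(** * Complex derivatives *)

Lemma is_derive_C_approx (F : C -> C) z l : is_derive F z l ->
  forall eps, 0 < eps -> exists del, 0 < del /\ forall w, Cmod (w - z) < del ->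
    Cmod (F w - F z - l * (w - z)) <= eps * Cmod (w - z).
Proof.
  intros [_ Hd] eps Heps.
  destruct (Hd z (fun P H => H) (mkposreal eps Heps)) as [del Hdel].
  exists del. split; [apply cond_pos|].
  intros w Hw. specialize (Hdel w Hw). simpl in Hdel.
  replace (l * (w - z))%C with (scal (minus w z) l); [exact Hdel|].
  unfold scal; simpl. unfold mult; simpl. apply Cmult_comm.
Qed.

Lemma is_derive_C_of_approx (F : C -> C) z l :
  (forall eps, 0 < eps -> exists del, 0 < del /\ forall w, Cmod (w - z) < del ->
    Cmod (F w - F z - l * (w - z)) <= eps * Cmod (w - z)) -> is_derive F z l.
Proof.
  intros H. split; [apply is_linear_scal_l|].
  intros x Hx.
  apply (@is_filter_lim_locally_unique C_AbsRing (AbsRing_NormedModule C_AbsRing)) in Hx.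
  subst x. intros eps. destruct (H eps (cond_pos eps)) as [del [Hdel Hw]].
  exists (mkposreal del Hdel). intros w Hb.
  change (Cmod (F w - F z - (w - z) * l) <= eps * Cmod (w - z)).
  rewrite (Cmult_comm (w - z)). apply Hw. exact Hb.
Qed.

Lemma is_derive_R_of_approx (f : R -> R) x l :
  (forall eps, 0 < eps -> exists del, 0 < del /\ forall y, Rabs (y - x) < del ->
    Rabs (f y - f x - l * (y - x)) <= eps * Rabs (y - x)) -> is_derive f x l.
Proof.
  intros H. split; [apply is_linear_scal_l|].
  intros x' Hx.
  apply (@is_filter_lim_locally_unique R_AbsRing (AbsRing_NormedModule R_AbsRing)) in Hx.
  subst x'. intros eps. destruct (H eps (cond_pos eps)) as [del [Hdel Hw]].
  exists (mkposreal del Hdel). intros y Hb.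
  change (Rabs (f y - f x - (y - x) * l) <= eps * Rabs (y - x)).
  rewrite (Rmult_comm (y - x)). apply Hw. exact Hb.
Qed.

Lemma is_derive_C_continuous (F : C -> C) z l : is_derive F z l ->
  forall eps, 0 < eps -> exists del, 0 < del /\ forall w, Cmod (w - z) < del ->
    Cmod (F w - F z) < eps.
Proof.
  intros Hd eps Heps.
  destruct (is_derive_C_approx F z l Hd 1 Rlt_0_1) as [d1 [Hd1 H1]].
  pose proof (Cmod_ge_0 l).
  exists (Rmin d1 (eps / (Cmod l + 1))). split.
  { apply Rmin_pos; auto. apply Rdiv_lt_0_compat; lra. }
  intros w Hw. pose proof (Rmin_l d1 (eps / (Cmod l + 1))).
  pose proof (Rmin_r d1 (eps / (Cmod l + 1))).
  specialize (H1 w ltac:(lra)).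
  replace (F w - F z)%C with ((F w - F z - l * (w - z)) + l * (w - z))%C by ring.
  eapply Rle_lt_trans; [apply Cmod_triangle|]. rewrite Cmod_mult.
  pose proof (Cmod_ge_0 (w - z)).
  assert (Cmod (w - z) * (Cmod l + 1) < eps).
  { apply Rlt_le_trans with (eps / (Cmod l + 1) * (Cmod l + 1)).
    - apply Rmult_lt_compat_r; lra.
    - right. field. lra. }
  nra.
Qed.

(* Coquelicot states the product and chain rules over [AbsRing_NormedModule C_AbsRing],
   a copy of [C_NormedModule] that is not syntactically equal to it. *)
Lemma is_derive_C_to_AbsRing (f : C -> C) x l : is_derive f x l ->
  @is_derive C_AbsRing (AbsRing_NormedModule C_AbsRing) f x l.
Proof. intros [_ H]. split; [apply is_linear_scal_l|]. exact H. Qed.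

Lemma is_derive_C_of_AbsRing (f : C -> C) x l :
  @is_derive C_AbsRing (AbsRing_NormedModule C_AbsRing) f x l -> is_derive f x l.
Proof. intros [_ H]. split; [apply is_linear_scal_l|]. exact H. Qed.

Lemma is_derive_C_const (c : C) x : is_derive (fun _ : C => c) x (RtoC 0).
Proof. exact (@is_derive_const C_AbsRing C_NormedModule c x). Qed.

Lemma is_derive_C_id x : is_derive (fun z : C => z) x (RtoC 1).
Proof. apply is_derive_C_of_AbsRing. exact (@is_derive_id C_AbsRing x). Qed.

Lemma is_derive_C_ext (f g : C -> C) z l : (forall w, f w = g w) -> is_derive f z l -> is_derive g z l.
Proof. intros E H. apply (is_derive_ext f g); auto. Qed.

Lemma is_derive_C_plus (f g : C -> C) x a b : is_derive f x a -> is_derive g x b ->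
  is_derive (fun z => f z + g z)%C x (a + b)%C.
Proof. exact (@is_derive_plus C_AbsRing C_NormedModule f g x a b). Qed.

Lemma is_derive_C_minus (f g : C -> C) x a b : is_derive f x a -> is_derive g x b ->
  is_derive (fun z => f z - g z)%C x (a - b)%C.
Proof. exact (@is_derive_minus C_AbsRing C_NormedModule f g x a b). Qed.

Lemma is_derive_C_mult (f g : C -> C) x a b : is_derive f x a -> is_derive g x b ->
  is_derive (fun z => f z * g z)%C x (a * g x + f x * b)%C.
Proof.
  intros Ha Hb. apply is_derive_C_of_AbsRing.
  exact (@is_derive_mult C_AbsRing f g x a b
           (is_derive_C_to_AbsRing _ _ _ Ha) (is_derive_C_to_AbsRing _ _ _ Hb) Cmult_comm).
Qed.

Lemma is_derive_C_comp (f g : C -> C) x a b : is_derive f (g x) a -> is_derive g x b ->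
  is_derive (fun z => f (g z)) x (b * a)%C.
Proof.
  intros Ha Hb.
  exact (@is_derive_comp C_AbsRing C_NormedModule f g x a b Ha (is_derive_C_to_AbsRing _ _ _ Hb)).
Qed.

Lemma is_derive_Cinv (y : C) : y <> RtoC 0 -> is_derive Cinv y (- / (y * y))%C.
Proof.
  intros Hy. apply is_derive_C_of_approx. intros eps Heps.
  pose proof (Cmod_gt_0 y Hy) as Hm. set (m := Cmod y) in *.
  assert (Hm3 : 0 < m * m * m) by (apply Rmult_lt_0_compat; nra).
  exists (Rmin (m / 2) (eps * (m * m * m) / 2)). split.
  { apply Rmin_pos; [lra|]. apply Rdiv_lt_0_compat; nra. }
  intros w Hw. pose proof (Rmin_l (m / 2) (eps * (m * m * m) / 2)).
  pose proof (Rmin_r (m / 2) (eps * (m * m * m) / 2)).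
  assert (Hwy : m / 2 <= Cmod w).
  { pose proof (Cmod_minus_ge y w) as T. rewrite Cmod_minus_sym in T. unfold m in *. lra. }
  assert (Hw0 : w <> RtoC 0) by (intro E; subst; rewrite Cmod_0 in Hwy; lra).
  replace (/ w - / y - - / (y * y) * (w - y))%C with ((w - y) * (w - y) / (w * (y * y)))%C
    by (field; auto).
  rewrite Cmod_div by (repeat apply Cmult_neq_0; auto).
  rewrite !Cmod_mult. fold m.
  pose proof (Cmod_ge_0 (w - y)). set (d := Cmod (w - y)) in *.
  assert (Hd : d <= eps * (m * m * m) / 2) by lra.
  apply Rle_trans with (d * d / (m / 2 * (m * m))).
  - unfold Rdiv. apply Rmult_le_compat_l; [nra|].
    apply Rinv_le_contravar; [nra|]. apply Rmult_le_compat_r; nra.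
  - apply Rle_trans with (d * (eps * (m * m * m) / 2) / (m / 2 * (m * m))).
    + unfold Rdiv. apply Rmult_le_compat_r; [left; apply Rinv_0_lt_compat; nra|].
      apply Rmult_le_compat_l; lra.
    + right. field. lra.
Qed.

Lemma is_derive_C_inv (f : C -> C) x a : is_derive f x a -> f x <> RtoC 0 ->
  is_derive (fun z => / f z)%C x (- a / (f x * f x))%C.
Proof.
  intros Ha Hf.
  replace (- a / (f x * f x))%C with (a * (- / (f x * f x)))%C by (field; auto).
  apply (is_derive_C_comp Cinv f); auto. apply is_derive_Cinv; auto.
Qed.

Lemma ex_derive_C_affine (al be : C) z : ex_derive (fun w => al + be * w)%C z.
Proof.
  eexists. apply is_derive_C_plus; [apply is_derive_C_const|].
  apply is_derive_C_mult; [apply is_derive_C_const|apply is_derive_C_id].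
Qed.

Lemma exists_div_pow_lt (b A d : R) : 2 <= b -> 0 <= A -> 0 < d -> exists k, A / b ^ k < d.
Proof.
  intros hb hA hd. destruct (INR_unbounded (A / d)) as [n Hn]. exists n.
  assert (Hpow : INR n < b ^ n).
  { clear Hn. induction n as [|n IH]; [simpl; lra|].
    rewrite S_INR. simpl (b ^ S n). assert (1 <= b ^ n) by (apply pow_R1_Rle; lra). nra. }
  assert (0 < b ^ n) by (apply pow_lt; lra).
  assert (A < b ^ n * d).
  { replace A with (A / d * d) by (field; lra). apply Rmult_lt_compat_r; lra. }
  apply Rmult_lt_reg_r with (b ^ n); [lra|].
  replace (A / b ^ n * b ^ n) with A by (field; lra). lra.
Qed.

Lemma nested_intervals (a b : nat -> R) :
  (forall k, a k <= a (S k)) -> (forall k, b (S k) <= b k) -> (forall k, a k <= b k) ->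
  exists p, forall k, a k <= p <= b k.
Proof.
  intros Ha Hb Hab.
  assert (Ma : forall j k, (j <= k)%nat -> a j <= a k)
    by (induction 1; [lra|specialize (Ha m); lra]).
  assert (Mb : forall j k, (j <= k)%nat -> b k <= b j)
    by (induction 1; [lra|specialize (Hb m); lra]).
  assert (Hjk : forall j k, a j <= b k).
  { intros j k. destruct (Nat.le_ge_cases j k) as [h|h].
    - specialize (Ma j k h). specialize (Hab k). lra.
    - specialize (Mb k j h). specialize (Hab j). lra. }
  destruct (completeness (fun r => exists k, r = a k)) as [p [Hub Hlub]].
  - exists (b 0%nat). intros r [k ->]. apply Hjk.
  - exists (a 0%nat), 0%nat. reflexivity.
  - exists p. intros k. split.
    + apply Hub. exists k. reflexivity.
    + apply Hlub. intros r [j ->]. apply Hjk.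
Qed.

(** * Integrals along the sides of a rectangle *)

Lemma ex_RInt_C_of_continuous (f : R -> C) a b : a <= b ->
  (forall x, a <= x <= b -> forall eps, 0 < eps ->
     exists del, 0 < del /\ forall y, Rabs (y - x) < del -> Cmod (f y - f x) < eps) ->
  @ex_RInt CR f a b.
Proof.
  intros hab H. apply ex_RInt_continuous. intros x Hx.
  rewrite Rmin_left, Rmax_right in Hx by lra.
  apply filterlim_locally. intros eps.
  destruct (H x Hx eps (cond_pos eps)) as [del [Hdel Hy]].
  exists (mkposreal del Hdel). intros y Hball. specialize (Hy y Hball).
  split; simpl; unfold ball; simpl; unfold AbsRing_ball, abs, minus, plus, opp; simpl;
    eapply Rle_lt_trans; try exact Hy.
  - apply (Rabs_fst_le_Cmod (f y - f x)%C).
  - apply (Rabs_snd_le_Cmod (f y - f x)%C).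
Qed.

Lemma ex_RInt_hline (F : C -> C) x1 x2 y : x1 <= x2 ->
  (forall x, x1 <= x <= x2 -> ex_derive F (x, y)) ->
  @ex_RInt CR (fun x => F (x, y)) x1 x2.
Proof.
  intros h H. apply ex_RInt_C_of_continuous; auto. intros x Hx eps Heps.
  destruct (H x Hx) as [l Hl].
  destruct (is_derive_C_continuous F (x, y) l Hl eps Heps) as [del [Hdel Hw]].
  exists del. split; auto. intros x' Hx'. apply Hw.
  eapply Rle_lt_trans; [apply Cmod_pair_minus_le|]. rewrite Rminus_eq_0, Rabs_R0. lra.
Qed.

Lemma ex_RInt_vline (F : C -> C) x y1 y2 : y1 <= y2 ->
  (forall y, y1 <= y <= y2 -> ex_derive F (x, y)) ->
  @ex_RInt CR (fun y => F (x, y)) y1 y2.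
Proof.
  intros h H. apply ex_RInt_C_of_continuous; auto. intros y Hy eps Heps.
  destruct (H y Hy) as [l Hl].
  destruct (is_derive_C_continuous F (x, y) l Hl eps Heps) as [del [Hdel Hw]].
  exists del. split; auto. intros y' Hy'. apply Hw.
  eapply Rle_lt_trans; [apply Cmod_pair_minus_le|]. rewrite Rminus_eq_0, Rabs_R0. lra.
Qed.

Lemma is_RInt_C_scal (f : R -> C) a b I c : @is_RInt CR f a b I ->
  @is_RInt CR (fun x => c * f x)%C a b (c * I)%C.
Proof.
  intros H.
  pose proof (is_RInt_fct_extend_fst f a b I H) as H1.
  pose proof (is_RInt_fct_extend_snd f a b I H) as H2.
  destruct c as [c1 c2], I as [i1 i2]. simpl in H1, H2.
  apply (is_RInt_fct_extend_pair (fun x => ((c1, c2) * f x)%C)); simpl.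
  - apply (is_RInt_minus (V := R_NormedModule) (fun x => c1 * fst (f x)) (fun x => c2 * snd (f x)));
      apply (is_RInt_scal (V := R_NormedModule)); auto.
  - apply (is_RInt_plus (V := R_NormedModule) (fun x => c1 * snd (f x)) (fun x => c2 * fst (f x)));
      apply (is_RInt_scal (V := R_NormedModule)); auto.
Qed.

Lemma RInt_ge_const (g : R -> R) a b m : a <= b -> ex_RInt g a b ->
  (forall x, a <= x <= b -> m <= g x) -> (b - a) * m <= RInt g a b.
Proof.
  intros hab Hg H. replace ((b - a) * m) with (RInt (fun _ => m) a b) by (rewrite RInt_const; reflexivity).
  apply RInt_le; auto; [apply ex_RInt_const|]. intros; apply H; lra.
Qed.

Lemma RInt_le_const (g : R -> R) a b m : a <= b -> ex_RInt g a b ->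
  (forall x, a <= x <= b -> g x <= m) -> RInt g a b <= (b - a) * m.
Proof.
  intros hab Hg H. replace ((b - a) * m) with (RInt (fun _ => m) a b) by (rewrite RInt_const; reflexivity).
  apply RInt_le; auto; [apply ex_RInt_const|]. intros; apply H; lra.
Qed.

Lemma RInt_C_lincomb (f g : R -> C) a b c : @ex_RInt CR f a b -> @ex_RInt CR g a b ->
  @RInt CR (fun x => f x + c * g x)%C a b = (@RInt CR f a b + c * @RInt CR g a b)%C.
Proof.
  intros [I HI] [K HK].
  rewrite (is_RInt_unique (V := CR) f a b I HI), (is_RInt_unique (V := CR) g a b K HK).
  apply is_RInt_unique. apply (is_RInt_plus (V := CR)); auto. apply is_RInt_C_scal; auto.
Qed.

Lemma RInt_C_norm_le (f : R -> C) a b M : a <= b -> @ex_RInt CR f a b ->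
  (forall x, a <= x <= b -> Cmod (f x) <= M) -> Cmod (@RInt CR f a b) <= (b - a) * M.
Proof.
  intros hab [I HI] HM. rewrite (is_RInt_unique (V := CR) f a b I HI), <- norm_C_R.
  apply (norm_RInt_le_const (V := C_R_NormedModule) f a b I M hab); auto.
  intros x Hx. rewrite norm_C_R. auto.
Qed.

Lemma RInt_C_fst (f : R -> C) a b : @ex_RInt CR f a b ->
  fst (@RInt CR f a b) = RInt (fun x => fst (f x)) a b /\ ex_RInt (fun x => fst (f x)) a b.
Proof.
  intros [I HI]. rewrite (is_RInt_unique (V := CR) f a b I HI).
  pose proof (is_RInt_fct_extend_fst f a b I HI) as H.
  split; [symmetry; apply is_RInt_unique; exact H | exists (fst I); exact H].
Qed.

Lemma RInt_C_snd (f : R -> C) a b : @ex_RInt CR f a b ->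
  snd (@RInt CR f a b) = RInt (fun x => snd (f x)) a b /\ ex_RInt (fun x => snd (f x)) a b.
Proof.
  intros [I HI]. rewrite (is_RInt_unique (V := CR) f a b I HI).
  pose proof (is_RInt_fct_extend_snd f a b I HI) as H.
  split; [symmetry; apply is_RInt_unique; exact H | exists (snd I); exact H].
Qed.

Definition rect_contour (F : C -> C) (x1 x2 y1 y2 : R) : C :=
  (@RInt CR (fun x => F (x, y1)) x1 x2 - @RInt CR (fun x => F (x, y2)) x1 x2
   + Ci * (@RInt CR (fun y => F (x2, y)) y1 y2 - @RInt CR (fun y => F (x1, y)) y1 y2))%C.

Definition holo_on_rect_boundary (F : C -> C) (x1 x2 y1 y2 : R) : Prop :=
  (forall x, x1 <= x <= x2 -> ex_derive F (x, y1) /\ ex_derive F (x, y2)) /\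
  (forall y, y1 <= y <= y2 -> ex_derive F (x1, y) /\ ex_derive F (x2, y)).

Definition holo_on_rect (F : C -> C) (x1 x2 y1 y2 : R) : Prop :=
  forall x y, x1 <= x <= x2 -> y1 <= y <= y2 -> ex_derive F (x, y).

Lemma holo_on_rect_boundary_of_rect F x1 x2 y1 y2 : x1 <= x2 -> y1 <= y2 ->
  holo_on_rect F x1 x2 y1 y2 -> holo_on_rect_boundary F x1 x2 y1 y2.
Proof. intros hx hy H. split; intros; split; apply H; lra. Qed.

Lemma holo_on_rect_sub F x1 x2 y1 y2 x1' x2' y1' y2' :
  x1 <= x1' -> x2' <= x2 -> y1 <= y1' -> y2' <= y2 ->
  holo_on_rect F x1 x2 y1 y2 -> holo_on_rect F x1' x2' y1' y2'.
Proof. intros h1 h2 h3 h4 H x y Hx Hy. apply H; lra. Qed.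

Lemma rect_contour_ex_RInt F x1 x2 y1 y2 : x1 <= x2 -> y1 <= y2 ->
  holo_on_rect_boundary F x1 x2 y1 y2 ->
  @ex_RInt CR (fun x => F (x, y1)) x1 x2 /\ @ex_RInt CR (fun x => F (x, y2)) x1 x2 /\
  @ex_RInt CR (fun y => F (x1, y)) y1 y2 /\ @ex_RInt CR (fun y => F (x2, y)) y1 y2.
Proof.
  intros hx hy [B1 B2].
  split; [|split; [|split]].
  - apply ex_RInt_hline; auto. intros x Hx. apply (B1 x Hx).
  - apply ex_RInt_hline; auto. intros x Hx. apply (B1 x Hx).
  - apply ex_RInt_vline; auto. intros y Hy. apply (B2 y Hy).
  - apply ex_RInt_vline; auto. intros y Hy. apply (B2 y Hy).
Qed.

Lemma rect_contour_split_x F x1 x2 x3 y1 y2 : x1 <= x2 -> x2 <= x3 -> y1 <= y2 ->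
  holo_on_rect_boundary F x1 x2 y1 y2 -> holo_on_rect_boundary F x2 x3 y1 y2 ->
  rect_contour F x1 x3 y1 y2 = (rect_contour F x1 x2 y1 y2 + rect_contour F x2 x3 y1 y2)%C.
Proof.
  intros h12 h23 hy B B'.
  destruct (rect_contour_ex_RInt F x1 x2 y1 y2 h12 hy B) as (I1 & I3 & _).
  destruct (rect_contour_ex_RInt F x2 x3 y1 y2 h23 hy B') as (I2 & I4 & _).
  unfold rect_contour.
  rewrite <- (RInt_Chasles _ x1 x2 x3 I1 I2), <- (RInt_Chasles _ x1 x2 x3 I3 I4).
  change plus with Cplus. ring.
Qed.

Lemma rect_contour_split_y F x1 x2 y1 y2 y3 : x1 <= x2 -> y1 <= y2 -> y2 <= y3 ->
  holo_on_rect_boundary F x1 x2 y1 y2 -> holo_on_rect_boundary F x1 x2 y2 y3 ->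
  rect_contour F x1 x2 y1 y3 = (rect_contour F x1 x2 y1 y2 + rect_contour F x1 x2 y2 y3)%C.
Proof.
  intros hx h12 h23 B B'.
  destruct (rect_contour_ex_RInt F x1 x2 y1 y2 hx h12 B) as (_ & _ & I1 & I3).
  destruct (rect_contour_ex_RInt F x1 x2 y2 y3 hx h23 B') as (_ & _ & I2 & I4).
  unfold rect_contour.
  rewrite <- (RInt_Chasles _ y1 y2 y3 I1 I2), <- (RInt_Chasles _ y1 y2 y3 I3 I4).
  change plus with Cplus. ring.
Qed.

Lemma rect_contour_lincomb F G c x1 x2 y1 y2 : x1 <= x2 -> y1 <= y2 ->
  holo_on_rect_boundary F x1 x2 y1 y2 -> holo_on_rect_boundary G x1 x2 y1 y2 ->
  rect_contour (fun z => F z + c * G z)%C x1 x2 y1 y2 =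
  (rect_contour F x1 x2 y1 y2 + c * rect_contour G x1 x2 y1 y2)%C.
Proof.
  intros hx hy BF BG.
  destruct (rect_contour_ex_RInt F x1 x2 y1 y2 hx hy BF) as (F1 & F2 & F3 & F4).
  destruct (rect_contour_ex_RInt G x1 x2 y1 y2 hx hy BG) as (G1 & G2 & G3 & G4).
  unfold rect_contour. rewrite !RInt_C_lincomb by auto. ring.
Qed.

Lemma rect_contour_norm_le F x1 x2 y1 y2 M : x1 <= x2 -> y1 <= y2 ->
  holo_on_rect_boundary F x1 x2 y1 y2 ->
  (forall x, x1 <= x <= x2 -> Cmod (F (x, y1)) <= M /\ Cmod (F (x, y2)) <= M) ->
  (forall y, y1 <= y <= y2 -> Cmod (F (x1, y)) <= M /\ Cmod (F (x2, y)) <= M) ->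
  Cmod (rect_contour F x1 x2 y1 y2) <= 2 * ((x2 - x1) + (y2 - y1)) * M.
Proof.
  intros hx hy BF HM1 HM2.
  destruct (rect_contour_ex_RInt F x1 x2 y1 y2 hx hy BF) as (F1 & F2 & F3 & F4).
  unfold rect_contour.
  pose proof (RInt_C_norm_le _ x1 x2 M hx F1 (fun x Hx => proj1 (HM1 x Hx))).
  pose proof (RInt_C_norm_le _ x1 x2 M hx F2 (fun x Hx => proj2 (HM1 x Hx))).
  pose proof (RInt_C_norm_le _ y1 y2 M hy F3 (fun y Hy => proj1 (HM2 y Hy))).
  pose proof (RInt_C_norm_le _ y1 y2 M hy F4 (fun y Hy => proj2 (HM2 y Hy))).
  eapply Rle_trans; [apply Cmod_triangle|]. rewrite Cmod_mult, Cmod_Ci.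
  pose proof (Cmod_minus_le (@RInt CR (fun x => F (x, y1)) x1 x2)
                            (@RInt CR (fun x => F (x, y2)) x1 x2)).
  pose proof (Cmod_minus_le (@RInt CR (fun y => F (x2, y)) y1 y2)
                            (@RInt CR (fun y => F (x1, y)) y1 y2)).
  lra.
Qed.

Lemma rect_contour_affine (al be : C) x1 x2 y1 y2 : x1 <= x2 -> y1 <= y2 ->
  rect_contour (fun z => al + be * z)%C x1 x2 y1 y2 = RtoC 0.
Proof.
  intros hx hy.
  assert (B : holo_on_rect_boundary (fun z => al + be * z)%C x1 x2 y1 y2)
    by (split; intros; split; apply ex_derive_C_affine).
  destruct (rect_contour_ex_RInt _ x1 x2 y1 y2 hx hy B) as (F1 & F2 & F3 & F4).
  assert (Diff : forall (f g : R -> C) a b, @ex_RInt CR f a b -> @ex_RInt CR g a b ->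
            (@RInt CR f a b - @RInt CR g a b)%C = @RInt CR (fun t => f t + (-1) * g t)%C a b).
  { intros f g a b Hf Hg. rewrite RInt_C_lincomb by auto. ring. }
  unfold rect_contour. rewrite (Diff _ _ x1 x2 F1 F2), (Diff _ _ y1 y2 F4 F3).
  rewrite (RInt_ext (V := CR) _ (fun _ => be * (0, y1 - y2)%R)%C).
  2:{ intros x _. destruct al, be. apply injective_projections; simpl; ring. }
  rewrite (RInt_ext (V := CR) (fun y => _ + _)%C (fun _ => be * (x2 - x1, 0)%R)%C).
  2:{ intros y _. destruct al, be. apply injective_projections; simpl; ring. }
  rewrite !RInt_const. destruct be as [b1 b2].
  apply injective_projections; simpl; unfold scal; simpl; unfold mult; simpl; ring.
Qed.

(* Affine functions have zero contour integral, so only the deviation from the tangent map counts. *)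
Lemma rect_contour_tangent_bound F x1 x2 y1 y2 p l M : x1 <= x2 -> y1 <= y2 ->
  holo_on_rect F x1 x2 y1 y2 ->
  (forall x y, x1 <= x <= x2 -> y1 <= y <= y2 -> Cmod (F (x, y) - F p - l * ((x, y) - p)) <= M) ->
  Cmod (rect_contour F x1 x2 y1 y2) <= 2 * ((x2 - x1) + (y2 - y1)) * M.
Proof.
  intros hx hy HF HM.
  set (G := fun z => (F z + (-1) * (F p - l * p + l * z))%C).
  assert (HG : holo_on_rect G x1 x2 y1 y2).
  { intros x y hx' hy'. destruct (HF x y hx' hy') as [m Hm]. eexists. unfold G.
    apply is_derive_C_plus; [exact Hm|]. apply is_derive_C_mult; [apply is_derive_C_const|].
    apply is_derive_C_plus; [apply is_derive_C_const|].
    apply is_derive_C_mult; [apply is_derive_C_const|apply is_derive_C_id]. }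
  assert (Eq : rect_contour F x1 x2 y1 y2 = rect_contour G x1 x2 y1 y2).
  { unfold G. rewrite rect_contour_lincomb, rect_contour_affine by
      (auto; apply holo_on_rect_boundary_of_rect; auto; intros ? ? _ _; apply ex_derive_C_affine).
    ring. }
  assert (Bd : forall x y, x1 <= x <= x2 -> y1 <= y <= y2 -> Cmod (G (x, y)) <= M).
  { intros x y hx' hy'. unfold G.
    replace (F (x, y) + -1 * (F p - l * p + l * (x, y)))%C
      with (F (x, y) - F p - l * ((x, y) - p))%C by ring. auto. }
  rewrite Eq. apply rect_contour_norm_le; auto.
  - apply holo_on_rect_boundary_of_rect; auto.
  - intros x hx'. split; apply Bd; lra.
  - intros y hy'. split; apply Bd; lra.
Qed.

(** * Goursat's theorem for rectangles *)

Record rect := Rect { rx1 : R; rx2 : R; ry1 : R; ry2 : R }.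

Definition rect_ok (q : rect) : Prop := rx1 q <= rx2 q /\ ry1 q <= ry2 q.
Definition contour (F : C -> C) (q : rect) : C := rect_contour F (rx1 q) (rx2 q) (ry1 q) (ry2 q).
Definition holo_on (F : C -> C) (q : rect) : Prop := holo_on_rect F (rx1 q) (rx2 q) (ry1 q) (ry2 q).

Definition quadrant (q : rect) (i j : bool) : rect :=
  let xm := (rx1 q + rx2 q) / 2 in
  let ym := (ry1 q + ry2 q) / 2 in
  Rect (if i then xm else rx1 q) (if i then rx2 q else xm)
       (if j then ym else ry1 q) (if j then ry2 q else ym).

Lemma quadrant_spec q i j : rect_ok q ->
  rx1 q <= rx1 (quadrant q i j) /\ rx2 (quadrant q i j) <= rx2 q /\
  ry1 q <= ry1 (quadrant q i j) /\ ry2 (quadrant q i j) <= ry2 q /\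
  rx2 (quadrant q i j) - rx1 (quadrant q i j) = (rx2 q - rx1 q) / 2 /\
  ry2 (quadrant q i j) - ry1 (quadrant q i j) = (ry2 q - ry1 q) / 2.
Proof. intros [h1 h2]. destruct i, j; simpl; repeat split; lra. Qed.

Lemma holo_on_quadrant F q i j : rect_ok q -> holo_on F q -> holo_on F (quadrant q i j).
Proof.
  intros hq HF. destruct (quadrant_spec q i j hq) as (a & b & c & d & _).
  eapply holo_on_rect_sub; [| | | |exact HF]; lra.
Qed.

Lemma contour_quadrants F q : rect_ok q -> holo_on F q ->
  contour F q = (contour F (quadrant q false false) + contour F (quadrant q true false)
                 + contour F (quadrant q false true) + contour F (quadrant q true true))%C.
Proof.
  intros [hx hy] HF. unfold contour, holo_on in *; simpl.
  set (xm := (rx1 q + rx2 q) / 2). set (ym := (ry1 q + ry2 q) / 2).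
  assert (h1 : rx1 q <= xm) by (unfold xm; lra). assert (h2 : xm <= rx2 q) by (unfold xm; lra).
  assert (h3 : ry1 q <= ym) by (unfold ym; lra). assert (h4 : ym <= ry2 q) by (unfold ym; lra).
  assert (Bd : forall a b c d, rx1 q <= a -> a <= b -> b <= rx2 q ->
                 ry1 q <= c -> c <= d -> d <= ry2 q -> holo_on_rect_boundary F a b c d).
  { intros a b c d ha hab hb hc hcd hd. apply holo_on_rect_boundary_of_rect; auto.
    eapply holo_on_rect_sub; [| | | |exact HF]; lra. }
  rewrite (rect_contour_split_x F _ xm) by (lra || apply Bd; lra).
  rewrite (rect_contour_split_y F _ _ _ ym) by (lra || apply Bd; lra).
  rewrite (rect_contour_split_y F xm _ _ ym) by (lra || apply Bd; lra).
  ring.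
Qed.

Lemma exists_heavy_quadrant F q : exists p : bool * bool,
  rect_ok q -> holo_on F q -> Cmod (contour F q) <= 4 * Cmod (contour F (quadrant q (fst p) (snd p))).
Proof.
  destruct (classic (exists p : bool * bool,
    Cmod (contour F q) <= 4 * Cmod (contour F (quadrant q (fst p) (snd p))))) as [[p Hp]|Hn].
  - exists p. auto.
  - exists (false, false). intros hq HF. exfalso.
    assert (A : forall p : bool * bool, 4 * Cmod (contour F (quadrant q (fst p) (snd p))) < Cmod (contour F q)).
    { intros p. apply Rnot_le_lt. intro. apply Hn. exists p. auto. }
    pose proof (A (false, false)); pose proof (A (true, false));
      pose proof (A (false, true)); pose proof (A (true, true)).
    simpl in *. rewrite (contour_quadrants F q hq HF) in *.
    set (a := contour F (quadrant q false false)) in *. set (b := contour F (quadrant q true false)) in *.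
    set (c := contour F (quadrant q false true)) in *. set (d := contour F (quadrant q true true)) in *.
    pose proof (Cmod_triangle (a + b + c)%C d). pose proof (Cmod_triangle (a + b)%C c).
    pose proof (Cmod_triangle a b). lra.
Qed.

Definition heavy_quadrant F q : rect :=
  let p := proj1_sig (constructive_indefinite_description _ (exists_heavy_quadrant F q)) in
  quadrant q (fst p) (snd p).

Lemma heavy_quadrant_spec F q : rect_ok q -> holo_on F q ->
  (exists i j, heavy_quadrant F q = quadrant q i j) /\
  Cmod (contour F q) <= 4 * Cmod (contour F (heavy_quadrant F q)).
Proof.
  unfold heavy_quadrant. destruct (constructive_indefinite_description _ _) as [p Hp]. simpl.
  intros hq HF. split; [exists (fst p), (snd p); reflexivity | auto].
Qed.

Fixpoint bisection F q (k : nat) : rect :=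
  match k with
  | O => q
  | S k => heavy_quadrant F (bisection F q k)
  end.

Lemma bisection_spec F q k : rect_ok q -> holo_on F q ->
  rect_ok (bisection F q k) /\ holo_on F (bisection F q k) /\
  rx2 (bisection F q k) - rx1 (bisection F q k) = (rx2 q - rx1 q) / 2 ^ k /\
  ry2 (bisection F q k) - ry1 (bisection F q k) = (ry2 q - ry1 q) / 2 ^ k /\
  Cmod (contour F q) <= 4 ^ k * Cmod (contour F (bisection F q k)).
Proof.
  intros hq HF. induction k as [|k IH].
  - simpl. split; [|split; [|split; [|split]]]; auto; try field; lra.
  - destruct IH as (hk & Hk & ex & ey & Hc). simpl bisection.
    set (q' := bisection F q k) in *.
    destruct (heavy_quadrant_spec F q' hk Hk) as [[i [j E]] Hq']. rewrite E in *.
    destruct (quadrant_spec q' i j hk) as (a & b & c & d & e & f).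
    assert (0 < 2 ^ k) by (apply pow_lt; lra).
    assert (0 <= 4 ^ k) by (apply pow_le; lra).
    split; [unfold rect_ok in *; lra|]. split; [apply holo_on_quadrant; auto|].
    split; [rewrite e, ex; simpl; field; lra|]. split; [rewrite f, ey; simpl; field; lra|].
    simpl. nra.
Qed.

Lemma bisection_nested F q k : rect_ok q -> holo_on F q ->
  rx1 (bisection F q k) <= rx1 (bisection F q (S k)) /\ rx2 (bisection F q (S k)) <= rx2 (bisection F q k) /\
  ry1 (bisection F q k) <= ry1 (bisection F q (S k)) /\ ry2 (bisection F q (S k)) <= ry2 (bisection F q k).
Proof.
  intros hq HF. destruct (bisection_spec F q k hq HF) as (hk & Hk & _). simpl bisection.
  destruct (heavy_quadrant_spec F _ hk Hk) as [[i [j ->]] _].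
  destruct (quadrant_spec _ i j hk) as (a & b & c & d & _). repeat split; lra.
Qed.

Lemma bisection_common_point F q : rect_ok q -> holo_on F q -> exists px py, forall k,
  rx1 (bisection F q k) <= px <= rx2 (bisection F q k) /\
  ry1 (bisection F q k) <= py <= ry2 (bisection F q k).
Proof.
  intros hq HF.
  assert (N := fun k => bisection_nested F q k hq HF).
  assert (O := fun k => proj1 (bisection_spec F q k hq HF)).
  destruct (nested_intervals (fun k => rx1 (bisection F q k)) (fun k => rx2 (bisection F q k)))
    as [px Hx]; try (intros k; destruct (N k) as (? & ? & ? & ?); destruct (O k); lra).
  destruct (nested_intervals (fun k => ry1 (bisection F q k)) (fun k => ry2 (bisection F q k)))
    as [py Hy]; try (intros k; destruct (N k) as (? & ? & ? & ?); destruct (O k); lra).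
  exists px, py. auto.
Qed.

(* On the k-th bisection rectangle F differs from its tangent map at the common point by
   o(2^-k), while the perimeter is O(2^-k); hence |contour F q| <= 4^k o(4^-k). *)
Lemma goursat_approx F q eps : rect_ok q -> holo_on F q -> 0 < eps ->
  Cmod (contour F q) <= 2 * eps * ((rx2 q - rx1 q + (ry2 q - ry1 q)) ^ 2).
Proof.
  intros hq HF Heps. destruct (bisection_common_point F q hq HF) as [px [py Hp]].
  destruct (Hp 0%nat) as [[p1 p2] [p3 p4]]. simpl in p1, p2, p3, p4.
  destruct (HF px py (conj p1 p2) (conj p3 p4)) as [l Hl].
  set (S := rx2 q - rx1 q + (ry2 q - ry1 q)). destruct hq as [hx hy].
  destruct (is_derive_C_approx F (px, py) l Hl eps Heps) as [del [Hdel Hd]].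
  destruct (exists_div_pow_lt 2 S del) as [k Hk]; [lra|unfold S; lra|auto|].
  destruct (bisection_spec F q k (conj hx hy) HF) as ([v1 v2] & Hk' & e & f & Hq).
  set (qk := bisection F q k) in *.
  assert (0 < 2 ^ k) by (apply pow_lt; lra).
  set (sk := S / 2 ^ k) in *.
  assert (Hsk : rx2 qk - rx1 qk + (ry2 qk - ry1 qk) = sk) by (unfold sk; rewrite e, f; unfold S; field; lra).
  destruct (Hp k) as [[k1 k2] [k3 k4]]. fold qk in k1, k2, k3, k4.
  assert (HB : Cmod (contour F qk) <= 2 * sk * (eps * sk)).
  { rewrite <- Hsk at 1. unfold contour. apply (rect_contour_tangent_bound F _ _ _ _ (px, py) l); auto.
    intros x y hx' hy'.
    assert (Cmod ((x, y) - (px, py))%C <= sk).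
    { eapply Rle_trans; [apply Cmod_pair_minus_le|]. rewrite <- Hsk.
      unfold Rabs; destruct (Rcase_abs (x - px)), (Rcase_abs (y - py)); lra. }
    eapply Rle_trans; [apply Hd; unfold sk in *; lra|]. apply Rmult_le_compat_l; lra. }
  eapply Rle_trans; [exact Hq|].
  replace (2 * eps * S ^ 2) with (4 ^ k * (2 * sk * (eps * sk))).
  - apply Rmult_le_compat_l; [apply pow_le; lra | exact HB].
  - unfold sk. replace 4 with (2 * 2) by ring. rewrite Rpow_mult_distr. field. lra.
Qed.

Theorem goursat F q : rect_ok q -> holo_on F q -> contour F q = RtoC 0.
Proof.
  intros hq HF. apply Cmod_eq_0, Rle_antisym; [|apply Cmod_ge_0].
  set (S := rx2 q - rx1 q + (ry2 q - ry1 q)).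
  apply le_epsilon. intros e he. rewrite Rplus_0_l.
  assert (hS : 0 <= S ^ 2) by apply pow2_ge_0.
  eapply Rle_trans; [apply (goursat_approx F q (e / (2 * S ^ 2 + 1))); auto|].
  - apply Rdiv_lt_0_compat; lra.
  - fold S. apply Rle_trans with (e * (2 * S ^ 2 / (2 * S ^ 2 + 1))).
    + right. field. lra.
    + rewrite <- (Rmult_1_r e) at 2. apply Rmult_le_compat_l; [lra|].
      apply Rmult_le_reg_r with (2 * S ^ 2 + 1); [lra|].
      unfold Rdiv. rewrite Rmult_assoc, Rinv_l by lra. lra.
Qed.

(** * The Cauchy estimate on a square *)

Definition square_contour (F : C -> C) (c1 c2 t : R) : C :=
  rect_contour F (c1 - t) (c1 + t) (c2 - t) (c2 + t).

Definition holo_on_square (F : C -> C) (c1 c2 s : R) : Prop :=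
  forall x y, Rabs (x - c1) <= s -> Rabs (y - c2) <= s -> ex_derive F (x, y).

Definition on_square_boundary (c1 c2 t x y : R) : Prop :=
  Rabs (x - c1) <= t /\ Rabs (y - c2) <= t /\ (Rabs (x - c1) = t \/ Rabs (y - c2) = t).

Definition quot2 (F : C -> C) (c : C) (z : C) : C := ((F z - F c) * / ((z - c) * (z - c)))%C.

Definition inv_shift (c : C) (z : C) : C := (/ (z - c))%C.

Lemma ex_derive_quot2 F c z : z <> c -> ex_derive F z -> ex_derive (quot2 F c) z.
Proof.
  intros Hz [l Hl]. eexists. unfold quot2.
  apply is_derive_C_mult; [apply is_derive_C_minus; [exact Hl|apply is_derive_C_const]|].
  apply is_derive_C_inv; [|apply Cmult_neq_0; apply Cminus_neq_0; auto].
  apply is_derive_C_mult; (apply is_derive_C_minus; [apply is_derive_C_id|apply is_derive_C_const]).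
Qed.

Lemma ex_derive_inv_shift c z : z <> c -> ex_derive (inv_shift c) z.
Proof.
  intros H. eexists. apply is_derive_C_inv; [|apply Cminus_neq_0; auto].
  apply is_derive_C_minus; [apply is_derive_C_id|apply is_derive_C_const].
Qed.

Lemma on_square_boundary_sides c1 c2 t : 0 <= t ->
  (forall u, c1 - t <= u <= c1 + t ->
     on_square_boundary c1 c2 t u (c2 - t) /\ on_square_boundary c1 c2 t u (c2 + t)) /\
  (forall u, c2 - t <= u <= c2 + t ->
     on_square_boundary c1 c2 t (c1 - t) u /\ on_square_boundary c1 c2 t (c1 + t) u).
Proof.
  intros ht.
  assert (Em : forall c, Rabs (c - t - c) = t)
    by (intros c; replace (c - t - c) with (- t) by ring; rewrite Rabs_Ropp; apply Rabs_pos_eq; auto).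
  assert (Ep : forall c, Rabs (c + t - c) = t)
    by (intros c; replace (c + t - c) with t by ring; apply Rabs_pos_eq; auto).
  split; intros u Hu; unfold on_square_boundary; rewrite Em, Ep.
  - assert (Rabs (u - c1) <= t) by (apply Rabs_le; lra).
    repeat split; auto; try lra; right; reflexivity.
  - assert (Rabs (u - c2) <= t) by (apply Rabs_le; lra).
    repeat split; auto; try lra; left; reflexivity.
Qed.

Lemma on_square_boundary_Cmod c1 c2 t x y : 0 < t -> on_square_boundary c1 c2 t x y ->
  t <= Cmod ((x, y) - (c1, c2))%C /\ Cmod ((x, y) - (c1, c2))%C <= 2 * t.
Proof.
  intros ht [h1 [h2 h3]]. split.
  - destruct h3 as [e|e]; rewrite <- e.
    + pose proof (Rabs_fst_le_Cmod ((x, y) - (c1, c2))%C) as T. simpl in T. unfold Rminus. lra.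
    + pose proof (Rabs_snd_le_Cmod ((x, y) - (c1, c2))%C) as T. simpl in T. unfold Rminus. lra.
  - pose proof (Cmod_pair_minus_le x y c1 c2). lra.
Qed.

Lemma on_square_boundary_neq c1 c2 t x y : 0 < t -> on_square_boundary c1 c2 t x y ->
  (x, y) <> (c1, c2).
Proof.
  intros ht Hb E. destruct (on_square_boundary_Cmod c1 c2 t x y ht Hb) as [A _].
  rewrite E in A. replace ((c1, c2) - (c1, c2))%C with (RtoC 0) in A by ring.
  rewrite Cmod_0 in A. lra.
Qed.

Lemma holo_on_square_boundary (P : C -> C) c1 c2 t : 0 <= t ->
  (forall x y, on_square_boundary c1 c2 t x y -> ex_derive P (x, y)) ->
  holo_on_rect_boundary P (c1 - t) (c1 + t) (c2 - t) (c2 + t).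
Proof.
  intros ht H. destruct (on_square_boundary_sides c1 c2 t ht) as [A B].
  split; intros u Hu; split; apply H; first [apply (A u Hu) | apply (B u Hu)].
Qed.

Lemma square_contour_norm_le (P : C -> C) c1 c2 t M : 0 <= t ->
  (forall x y, on_square_boundary c1 c2 t x y -> ex_derive P (x, y)) ->
  (forall x y, on_square_boundary c1 c2 t x y -> Cmod (P (x, y)) <= M) ->
  Cmod (square_contour P c1 c2 t) <= 8 * t * M.
Proof.
  intros ht HD HM. destruct (on_square_boundary_sides c1 c2 t ht) as [A B].
  replace (8 * t * M) with (2 * ((c1 + t - (c1 - t)) + (c2 + t - (c2 - t))) * M) by ring.
  unfold square_contour. apply rect_contour_norm_le; [lra|lra| | |].
  - apply holo_on_square_boundary; auto.
  - intros u Hu; split; apply HM; apply (A u Hu).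
  - intros u Hu; split; apply HM; apply (B u Hu).
Qed.

Lemma square_contour_ext (P Q : C -> C) c1 c2 t : 0 <= t ->
  (forall x y, on_square_boundary c1 c2 t x y -> P (x, y) = Q (x, y)) ->
  square_contour P c1 c2 t = square_contour Q c1 c2 t.
Proof.
  intros ht H. destruct (on_square_boundary_sides c1 c2 t ht) as [A B].
  unfold square_contour, rect_contour.
  assert (E : forall (f g : R -> C) a b, a <= b -> (forall u, a <= u <= b -> f u = g u) ->
            @RInt CR f a b = @RInt CR g a b).
  { intros f g a b hab Hfg. apply RInt_ext. intros u Hu.
    rewrite Rmin_left, Rmax_right in Hu by lra. apply Hfg. lra. }
  rewrite (E (fun x => P (x, c2 - t)) (fun x => Q (x, c2 - t))),
          (E (fun x => P (x, c2 + t)) (fun x => Q (x, c2 + t))),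
          (E (fun y => P (c1 + t, y)) (fun y => Q (c1 + t, y))),
          (E (fun y => P (c1 - t, y)) (fun y => Q (c1 - t, y))); try reflexivity; try lra;
    intros u Hu; apply H; first [apply (A u Hu) | apply (B u Hu)].
Qed.

Lemma quot2_holo_off_center F c1 c2 s a b c d : holo_on_square F c1 c2 s ->
  c1 - s <= a -> b <= c1 + s -> c2 - s <= c -> d <= c2 + s ->
  (forall x y, a <= x <= b -> c <= y <= d -> (x, y) <> (c1, c2)) ->
  holo_on_rect (quot2 F (c1, c2)) a b c d.
Proof.
  intros HF h1 h2 h3 h4 Hout x y hx hy. apply ex_derive_quot2; auto.
  apply HF; apply Rabs_le; lra.
Qed.

(* The square of side 2t is cut into nine squares of side 2t/3; the eight outer ones
   avoid the singularity of [quot2 F c], so their contours vanish by Goursat. *)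
Lemma square_contour_quot2_trisect F c1 c2 s t : holo_on_square F c1 c2 s -> 0 < t -> t <= s ->
  square_contour (quot2 F (c1, c2)) c1 c2 t = square_contour (quot2 F (c1, c2)) c1 c2 (t / 3).
Proof.
  intros HF ht hts. unfold square_contour. set (G := quot2 F (c1, c2)).
  assert (Bd : forall a b c d, c1 - s <= a -> a <= b -> b <= c1 + s -> c2 - s <= c -> c <= d ->
            d <= c2 + s -> a <> c1 -> b <> c1 -> c <> c2 -> d <> c2 -> holo_on_rect_boundary G a b c d).
  { intros a b c d ha hab hb hc hcd hd na nb nc nd.
    split; intros u Hu; split; apply ex_derive_quot2;
      try (apply HF; apply Rabs_le; lra); intro E; injection E as E1 E2; congruence. }
  assert (Z : forall a b c d, c1 - s <= a -> a <= b -> b <= c1 + s -> c2 - s <= c -> c <= d ->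
            d <= c2 + s -> (c1 < a \/ b < c1 \/ c2 < c \/ d < c2) -> rect_contour G a b c d = RtoC 0).
  { intros a b c d ha hab hb hc hcd hd Hout. apply (goursat G (Rect a b c d)); [split; simpl; lra|].
    apply quot2_holo_off_center with s; auto. intros x y hx hy E. injection E as E1 E2. simpl in hx, hy. destruct Hout as [|[|[|]]]; lra. }
  rewrite (rect_contour_split_x G (c1 - t) (c1 - t / 3)) by (lra || apply Bd; lra).
  rewrite (rect_contour_split_x G (c1 - t / 3) (c1 + t / 3)) by (lra || apply Bd; lra).
  rewrite (rect_contour_split_y G (c1 - t) _ (c2 - t) (c2 - t / 3)) by (lra || apply Bd; lra).
  rewrite (rect_contour_split_y G (c1 - t) _ (c2 - t / 3) (c2 + t / 3)) by (lra || apply Bd; lra).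
  rewrite (rect_contour_split_y G (c1 - t / 3) _ (c2 - t) (c2 - t / 3)) by (lra || apply Bd; lra).
  rewrite (rect_contour_split_y G (c1 - t / 3) _ (c2 - t / 3) (c2 + t / 3)) by (lra || apply Bd; lra).
  rewrite (rect_contour_split_y G (c1 + t / 3) _ (c2 - t) (c2 - t / 3)) by (lra || apply Bd; lra).
  rewrite (rect_contour_split_y G (c1 + t / 3) _ (c2 - t / 3) (c2 + t / 3)) by (lra || apply Bd; lra).
  rewrite (Z (c1 - t) (c1 - t / 3) (c2 - t) (c2 - t / 3)),
          (Z (c1 - t) (c1 - t / 3) (c2 - t / 3) (c2 + t / 3)),
          (Z (c1 - t) (c1 - t / 3) (c2 + t / 3) (c2 + t)),
          (Z (c1 - t / 3) (c1 + t / 3) (c2 - t) (c2 - t / 3)),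
          (Z (c1 - t / 3) (c1 + t / 3) (c2 + t / 3) (c2 + t)),
          (Z (c1 + t / 3) (c1 + t) (c2 - t) (c2 - t / 3)),
          (Z (c1 + t / 3) (c1 + t) (c2 - t / 3) (c2 + t / 3)),
          (Z (c1 + t / 3) (c1 + t) (c2 + t / 3) (c2 + t)) by lra.
  ring.
Qed.

Lemma square_contour_quot2_shrink F c1 c2 s k : holo_on_square F c1 c2 s -> 0 < s ->
  square_contour (quot2 F (c1, c2)) c1 c2 s = square_contour (quot2 F (c1, c2)) c1 c2 (s / 3 ^ k).
Proof.
  intros HF hs. induction k as [|k IH].
  - simpl. rewrite Rdiv_1_r. reflexivity.
  - rewrite IH. assert (1 <= 3 ^ k) by (apply pow_R1_Rle; lra).
    replace (s / 3 ^ S k) with (s / 3 ^ k / 3) by (simpl; field; lra).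
    apply (square_contour_quot2_trisect F c1 c2 s).
    + exact HF.
    + apply Rdiv_lt_0_compat; lra.
    + apply Rmult_le_reg_r with (3 ^ k); [lra|]. unfold Rdiv. rewrite Rmult_assoc, Rinv_l by lra. nra.
Qed.

Lemma inv_shift_side_bound a t : 0 < t -> Rabs a <= t -> 1 / (2 * t) <= t / (a ^ 2 + t ^ 2).
Proof.
  intros ht ha. assert (a * a <= t * t) by (unfold Rabs in ha; destruct (Rcase_abs a); nra).
  apply Rle_trans with (t / (t * t + t * t)).
  - right. field. repeat split; nra.
  - unfold Rdiv. apply Rmult_le_compat_l; [lra|]. apply Rinv_le_contravar; simpl; nra.
Qed.

(* The contour integral of 1/(z - c) is 2 pi i; integrating the imaginary part of
   each side against the bound 1/(2t) already gives modulus at least 4. *)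
Lemma square_contour_inv_shift_ge c1 c2 t : 0 < t ->
  4 <= Cmod (square_contour (inv_shift (c1, c2)) c1 c2 t).
Proof.
  intros ht. set (U := inv_shift (c1, c2)). set (m := 1 / (2 * t)).
  assert (DB : holo_on_rect_boundary U (c1 - t) (c1 + t) (c2 - t) (c2 + t)).
  { apply holo_on_square_boundary; [lra|]. intros x y Hb.
    apply ex_derive_inv_shift. apply (on_square_boundary_neq c1 c2 t); auto. }
  assert (h1 : c1 - t <= c1 + t) by lra. assert (h2 : c2 - t <= c2 + t) by lra.
  destruct (rect_contour_ex_RInt _ _ _ _ _ h1 h2 DB) as (F1 & F2 & F3 & F4).
  destruct (RInt_C_snd _ _ _ F1) as [E1 I1]. destruct (RInt_C_snd _ _ _ F2) as [E2 I2].
  destruct (RInt_C_fst _ _ _ F3) as [E3 I3]. destruct (RInt_C_fst _ _ _ F4) as [E4 I4].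
  assert (Re : forall x y, fst (U (x, y)) = (x - c1) / ((x - c1) ^ 2 + (y - c2) ^ 2)) by reflexivity.
  assert (Im : forall x y, snd (U (x, y)) = - (y - c2) / ((x - c1) ^ 2 + (y - c2) ^ 2)) by reflexivity.
  assert (Side : forall u v, v - t <= u <= v + t -> m <= t / ((u - v) ^ 2 + t ^ 2))
    by (intros u v Hu; apply inv_shift_side_bound; auto; apply Rabs_le; lra).
  assert (Hm : (c1 + t - (c1 - t)) * m = 1) by (unfold m; field; lra).
  assert (Hm' : (c2 + t - (c2 - t)) * m = 1) by (unfold m; field; lra).
  assert (L1 : (c1 + t - (c1 - t)) * m <= RInt (fun x => snd (U (x, c2 - t))) (c1 - t) (c1 + t)).
  { apply RInt_ge_const; auto. intros x Hx. rewrite Im.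
    replace (- (c2 - t - c2)) with t by ring. replace ((c2 - t - c2) ^ 2) with (t ^ 2) by ring. auto. }
  assert (L2 : RInt (fun x => snd (U (x, c2 + t))) (c1 - t) (c1 + t) <= (c1 + t - (c1 - t)) * - m).
  { apply RInt_le_const; auto. intros x Hx. rewrite Im, Rdiv_opp_l.
    replace (c2 + t - c2) with t by ring. pose proof (Side x c1 Hx). lra. }
  assert (L3 : (c2 + t - (c2 - t)) * m <= RInt (fun y => fst (U (c1 + t, y))) (c2 - t) (c2 + t)).
  { apply RInt_ge_const; auto. intros y Hy. rewrite Re.
    replace (c1 + t - c1) with t by ring. rewrite Rplus_comm. auto. }
  assert (L4 : RInt (fun y => fst (U (c1 - t, y))) (c2 - t) (c2 + t) <= (c2 + t - (c2 - t)) * - m).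
  { apply RInt_le_const; auto. intros y Hy. rewrite Re.
    replace (c1 - t - c1) with (- t) by ring. replace ((- t) ^ 2) with (t ^ 2) by ring.
    rewrite Rplus_comm, Rdiv_opp_l. pose proof (Side y c2 Hy). lra. }
  assert (Im_form : forall a b c d : C, snd (a - b + Ci * (c - d))%C = snd a - snd b + (fst c - fst d))
    by (intros [] [] [] []; simpl; ring).
  eapply Rle_trans; [|apply Rabs_snd_le_Cmod]. eapply Rle_trans; [|apply Rle_abs].
  unfold square_contour, rect_contour. rewrite Im_form, E1, E2, E3, E4. lra.
Qed.

Lemma Cmod_mult_inv_sq_le (a w : C) (t : R) : 0 < t -> t <= Cmod w ->
  Cmod (a * / (w * w))%C <= Cmod a / (t * t).
Proof.
  intros ht hw. assert (w <> RtoC 0) by (intro E; rewrite E, Cmod_0 in hw; lra).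
  rewrite Cmod_mult, Cmod_inv, Cmod_mult by (apply Cmult_neq_0; auto).
  unfold Rdiv. apply Rmult_le_compat_l; [apply Cmod_ge_0|].
  apply Rinv_le_contravar; [nra|]. apply Rmult_le_compat; lra.
Qed.

Lemma holo_on_square_mono F c1 c2 s t : t <= s -> holo_on_square F c1 c2 s -> holo_on_square F c1 c2 t.
Proof. intros h HF x y hx hy. apply HF; lra. Qed.

Lemma on_square_boundary_in c1 c2 t x y : on_square_boundary c1 c2 t x y ->
  Rabs (x - c1) <= t /\ Rabs (y - c2) <= t.
Proof. intros [a [b _]]. auto. Qed.

Lemma square_contour_quot2_le F c1 c2 s M : 0 < s -> holo_on_square F c1 c2 s ->
  (forall x y, Rabs (x - c1) <= s -> Rabs (y - c2) <= s -> Cmod (F (x, y) - F (c1, c2)) <= M) ->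
  Cmod (square_contour (quot2 F (c1, c2)) c1 c2 s) <= 8 * M / s.
Proof.
  intros hs HF HM. replace (8 * M / s) with (8 * s * (M / (s * s))) by (field; lra).
  apply square_contour_norm_le; [lra| |].
  - intros x y Hb. destruct (on_square_boundary_in _ _ _ _ _ Hb).
    apply ex_derive_quot2; [apply (on_square_boundary_neq c1 c2 s); auto | apply HF; auto].
  - intros x y Hb. destruct (on_square_boundary_in _ _ _ _ _ Hb). unfold quot2.
    eapply Rle_trans; [apply Cmod_mult_inv_sq_le with (t := s); auto|].
    + apply (on_square_boundary_Cmod c1 c2 s x y hs Hb).
    + unfold Rdiv. apply Rmult_le_compat_r; [left; apply Rinv_0_lt_compat; nra|]. apply HM; auto.
Qed.

(* On a small square, [quot2 F c] is [l / (z - c)] up to an error of size [eps / t]. *)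
Lemma square_contour_quot2_ge F c1 c2 t l eps : 0 < t -> 0 <= eps -> holo_on_square F c1 c2 t ->
  (forall w, Cmod (w - (c1, c2)) <= 2 * t ->
     Cmod (F w - F (c1, c2) - l * (w - (c1, c2))) <= eps * Cmod (w - (c1, c2))) ->
  4 * Cmod l - 16 * eps <= Cmod (square_contour (quot2 F (c1, c2)) c1 c2 t).
Proof.
  intros ht he HF Hd. set (c := (c1, c2)).
  set (E := quot2 (fun w => F w - l * (w - c))%C c).
  assert (Dz : forall x y, on_square_boundary c1 c2 t x y -> ex_derive F (x, y) /\ (x, y) <> c).
  { intros x y Hb. destruct (on_square_boundary_in _ _ _ _ _ Hb).
    split; [apply HF; auto | apply (on_square_boundary_neq c1 c2 t); auto]. }
  assert (DU : forall x y, on_square_boundary c1 c2 t x y -> ex_derive (inv_shift c) (x, y))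
    by (intros x y Hb; apply ex_derive_inv_shift, (Dz x y Hb)).
  assert (DE : forall x y, on_square_boundary c1 c2 t x y -> ex_derive E (x, y)).
  { intros x y Hb. destruct (Dz x y Hb) as [[f Hf] Hn]. apply ex_derive_quot2; auto.
    eexists. apply is_derive_C_minus; [exact Hf|].
    apply is_derive_C_mult; [apply is_derive_C_const|].
    apply is_derive_C_minus; [apply is_derive_C_id|apply is_derive_C_const]. }
  assert (Split : square_contour (quot2 F c) c1 c2 t =
                  (square_contour E c1 c2 t + l * square_contour (inv_shift c) c1 c2 t)%C).
  { rewrite (square_contour_ext (quot2 F c) (fun z => E z + l * inv_shift c z)%C) by
      (lra || (intros x y Hb; destruct (Dz x y Hb) as [_ Hn]; unfold E, quot2, inv_shift; cbv beta;
               field; apply Cminus_neq_0; auto)).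
    unfold square_contour. apply (rect_contour_lincomb E (inv_shift c) l); [lra|lra| |];
      apply holo_on_square_boundary; auto; lra. }
  assert (HE : Cmod (square_contour E c1 c2 t) <= 16 * eps).
  { replace (16 * eps) with (8 * t * (eps * (2 * t) / (t * t))) by (field; lra).
    apply square_contour_norm_le; auto; [lra|].
    intros x y Hb. destruct (on_square_boundary_Cmod c1 c2 t x y ht Hb) as [B1 B2]. unfold E, quot2.
    replace (F (x, y) - l * ((x, y) - c) - (F c - l * (c - c)))%C
      with (F (x, y) - F c - l * ((x, y) - c))%C by ring.
    eapply Rle_trans; [apply Cmod_mult_inv_sq_le with (t := t); auto|].
    unfold Rdiv. apply Rmult_le_compat_r; [left; apply Rinv_0_lt_compat; nra|].
    eapply Rle_trans; [apply Hd; auto|]. apply Rmult_le_compat_l; lra. }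
  pose proof (square_contour_inv_shift_ge c1 c2 t ht) as HU.
  set (SU := square_contour (inv_shift c) c1 c2 t) in *. set (SE := square_contour E c1 c2 t) in *.
  assert (T : Cmod (l * SU) - Cmod SE <= Cmod (SE + l * SU)) by (rewrite Cplus_comm; apply Cmod_plus_ge).
  rewrite Cmod_mult in T. rewrite Split. pose proof (Cmod_ge_0 l). change (4 <= Cmod SU) in HU. nra.
Qed.

Theorem cauchy_estimate F c1 c2 s M l : 0 < s -> holo_on_square F c1 c2 s ->
  (forall x y, Rabs (x - c1) <= s -> Rabs (y - c2) <= s -> Cmod (F (x, y) - F (c1, c2)) <= M) ->
  is_derive F (c1, c2) l -> Cmod l <= 2 * M / s.
Proof.
  intros hs HF HM Hl. apply le_epsilon. intros e he.
  destruct (is_derive_C_approx F (c1, c2) l Hl (e / 4) ltac:(lra)) as [del [Hdel Hd]].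
  destruct (exists_div_pow_lt 3 (2 * s) del) as [k Hk]; [lra|lra|auto|].
  assert (h3 : 1 <= 3 ^ k) by (apply pow_R1_Rle; lra).
  set (t := s / 3 ^ k) in *.
  assert (ht : 0 < t) by (apply Rdiv_lt_0_compat; lra).
  assert (hts : t <= s).
  { apply Rmult_le_reg_r with (3 ^ k); [lra|]. unfold t, Rdiv. rewrite Rmult_assoc, Rinv_l by lra. nra. }
  pose proof (square_contour_quot2_le F c1 c2 s M hs HF HM) as Hbig.
  rewrite (square_contour_quot2_shrink F c1 c2 s k HF hs) in Hbig. fold t in Hbig.
  pose proof (square_contour_quot2_ge F c1 c2 t l (e / 4) ht ltac:(lra) (holo_on_square_mono F c1 c2 s t hts HF))
    as Hsmall.
  assert (4 * Cmod l - 16 * (e / 4) <= 8 * M / s).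
  { eapply Rle_trans; [apply Hsmall|exact Hbig].
    intros w Hw. apply Hd. unfold t, Rdiv in *. lra. }
  replace (2 * M / s) with (8 * M / s / 4) by (field; lra). lra.
Qed.

(** * A mean value inequality for holomorphic functions *)

Definition segment (w z : C) (s : R) : C := (w + RtoC s * (z - w))%C.

Lemma segment_minus w z s t : (segment w z s - segment w z t = RtoC (s - t) * (z - w))%C.
Proof. unfold segment. rewrite RtoC_minus. ring. Qed.

Lemma Cmod_segment_minus w z s t : Cmod (segment w z s - segment w z t)%C = Rabs (s - t) * Cmod (z - w).
Proof. rewrite segment_minus, Cmod_mult, Cmod_R. reflexivity. Qed.

Lemma is_derive_Re_along_segment (phi : C -> C) (u w z : C) t l :
  is_derive phi (segment w z t) l ->
  is_derive (fun s => fst (u * phi (segment w z s))%C) t (fst (u * l * (z - w))%C).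
Proof.
  intros Hl. apply is_derive_R_of_approx. intros eps Heps.
  set (K := (Cmod u + 1) * (Cmod (z - w) + 1)).
  pose proof (Cmod_ge_0 u). pose proof (Cmod_ge_0 (z - w)).
  assert (HK : 0 < K) by (unfold K; nra).
  destruct (is_derive_C_approx phi (segment w z t) l Hl (eps / K) ltac:(apply Rdiv_lt_0_compat; lra))
    as [del [Hdel Hd]].
  exists (del / K). split; [apply Rdiv_lt_0_compat; lra|].
  intros s Hs. pose proof (Rabs_pos (s - t)).
  assert (Hq : Cmod (segment w z s - segment w z t)%C < del).
  { rewrite Cmod_segment_minus.
    apply Rle_lt_trans with (Rabs (s - t) * K); [apply Rmult_le_compat_l; unfold K; nra|].
    apply Rmult_lt_reg_r with (/ K); [apply Rinv_0_lt_compat; auto|].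
    rewrite Rmult_assoc, Rinv_r, Rmult_1_r by lra. exact Hs. }
  specialize (Hd _ Hq). rewrite Cmod_segment_minus in Hd.
  replace (fst (u * phi (segment w z s))%C - fst (u * phi (segment w z t))%C - fst (u * l * (z - w))%C * (s - t))
    with (fst (u * (phi (segment w z s) - phi (segment w z t) - l * (segment w z s - segment w z t)))%C).
  2:{ rewrite segment_minus. destruct u, l, z, w, (phi (segment _ _ s)), (phi (segment _ _ t)). simpl. ring. }
  eapply Rle_trans; [apply Rabs_fst_le_Cmod|]. rewrite Cmod_mult.
  apply Rle_trans with (Cmod u * (eps / K * (Rabs (s - t) * Cmod (z - w)))).
  { apply Rmult_le_compat_l; auto. }
  replace (Cmod u * (eps / K * (Rabs (s - t) * Cmod (z - w))))
    with (eps * Rabs (s - t) * (Cmod u * Cmod (z - w) / K)) by (field; lra).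
  rewrite <- (Rmult_1_r (eps * Rabs (s - t))) at 2.
  apply Rmult_le_compat_l; [nra|].
  apply Rmult_le_reg_r with K; [lra|].
  unfold Rdiv. rewrite Rmult_assoc, Rinv_l by lra. unfold K. nra.
Qed.

Lemma Re_conj_mult (d : C) : fst (Cconj d * d)%C = Cmod d * Cmod d.
Proof. destruct d as [a b]. unfold Cconj, Cmod; simpl. rewrite sqrt_sqrt by nra. ring. Qed.

(* Apply the real mean value theorem to s |-> Re (conj d * phi (segment w z s)),
   where d = phi z - phi w. *)
Theorem Cmod_mean_value (phi : C -> C) w z K : 0 <= K ->
  (forall t, 0 <= t <= 1 -> exists l, is_derive phi (segment w z t) l /\ Cmod l <= K) ->
  Cmod (phi z - phi w) <= K * Cmod (z - w).
Proof.
  intros HK H.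
  set (d := (phi z - phi w)%C). set (u := Cconj d).
  set (psi := fun s => fst (u * phi (segment w z s))%C).
  assert (Hd : forall s, 0 <= s <= 1 ->
            exists l, is_derive psi s (fst (u * l * (z - w))%C) /\ Cmod l <= K).
  { intros s Hs. destruct (H s Hs) as [l [Hl Hk]]. exists l. split; auto.
    apply is_derive_Re_along_segment. auto. }
  destruct (MVT_gen psi 0 1 (fun s => Derive psi s)) as [c [Hc Eq]].
  - intros x Hx. rewrite Rmin_left, Rmax_right in Hx by lra.
    destruct (Hd x ltac:(lra)) as [l [Hl _]]. apply Derive_correct. eexists; eauto.
  - intros x Hx. rewrite Rmin_left, Rmax_right in Hx by lra.
    destruct (Hd x Hx) as [l [Hl _]]. apply continuity_pt_filterlim.
    apply (ex_derive_continuous (K := R_AbsRing) (V := R_NormedModule)). eexists; eauto.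
  - rewrite Rmin_left, Rmax_right in Hc by lra.
    destruct (Hd c Hc) as [l [Hl Hk]]. rewrite (is_derive_unique psi c _ Hl) in Eq.
    assert (E1 : psi 1 - psi 0 = Cmod d * Cmod d).
    { unfold psi. replace (segment w z 1) with z by (unfold segment; ring).
      replace (segment w z 0) with w by (unfold segment; ring).
      rewrite <- Re_conj_mult. unfold u, d. destruct (phi z), (phi w). simpl. ring. }
    rewrite E1, Rminus_0_r, Rmult_1_r in Eq.
    pose proof (Cmod_ge_0 d) as Hd0. pose proof (Cmod_ge_0 (z - w)). pose proof (Cmod_ge_0 l).
    assert (B : fst (u * l * (z - w))%C <= Cmod d * (K * Cmod (z - w))).
    { eapply Rle_trans; [apply Rle_abs|]. eapply Rle_trans; [apply Rabs_fst_le_Cmod|].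
      rewrite !Cmod_mult. unfold u. rewrite Cmod_conj.
      replace (Cmod d * Cmod l * Cmod (z - w)) with (Cmod d * Cmod (z - w) * Cmod l) by ring.
      replace (Cmod d * (K * Cmod (z - w))) with (Cmod d * Cmod (z - w) * K) by ring.
      apply Rmult_le_compat_l; auto. apply Rmult_le_pos; auto. }
    fold d. destruct (Rle_lt_or_eq_dec 0 (Cmod d) Hd0) as [Hp|He].
    + apply Rmult_le_reg_l with (Cmod d); auto. lra.
    + rewrite <- He. apply Rmult_le_pos; auto.
Qed.

(** * Orbits of the shears *)

(* [coord true] is x and [coord false] is y; the n-th shear fixes [coord (Nat.odd n)]. *)
Definition coord (b : bool) (p : C2) : C := if b then fst p else snd p.

Definition shear (n : nat) (a : C) (e : R) (p : C2) : C2 :=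
  if Nat.odd n then (fst p, snd p + gfun e a (fst p))%C
  else (fst p + gfun e a (snd p), snd p)%C.

(* The finite part of [gamma]: the composite of the shears, ignoring the poles. *)
Fixpoint orbit (a : nat -> C) (eps : nat -> R) (n : nat) (z : C) : C2 :=
  match n with
  | O => (z, RtoC 0)
  | S m => shear (S m) (a (S m)) (eps (S m)) (orbit a eps m z)
  end.

Definition avoids_poles (a : nat -> C) (eps : nat -> R) (n : nat) (z : C) : Prop :=
  forall k, (1 <= k <= n)%nat -> coord (Nat.odd k) (orbit a eps (k - 1) z) <> a k.

Lemma coord_shear_same b n a e p : Nat.odd n = b -> coord b (shear n a e p) = coord b p.
Proof. intros <-. unfold shear, coord. destruct (Nat.odd n); reflexivity. Qed.

Lemma coord_shear_other b n a e p : Nat.odd n = negb b ->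
  coord b (shear n a e p) = (coord b p + gfun e a (coord (negb b) p))%C.
Proof. intros E. unfold shear, coord. rewrite E. destruct b; reflexivity. Qed.

Lemma Ceqb_false u v : Ceqb u v = false <-> u <> v.
Proof.
  unfold Ceqb. destruct u as [u1 u2], v as [v1 v2]; simpl.
  destruct (Req_EM_T u1 v1), (Req_EM_T u2 v2); subst; split; intros H; try congruence;
    try (intro E; injection E; congruence).
Qed.

Lemma fmap_shear n a e p :
  fmap n a e p = if Ceqb (coord (Nat.odd n) p) a then None else Some (shear n a e p).
Proof. destruct p as [x y]. unfold fmap, shear, coord. simpl. destruct (Nat.odd n); reflexivity. Qed.

Lemma gamma_Some a eps n z p : gamma a eps n z = Some p ->
  p = orbit a eps n z /\ avoids_poles a eps n z.
Proof.
  revert p. induction n as [|m IH]; intros p H; simpl in H.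
  - injection H as <-. split; [reflexivity|]. intros k Hk. lia.
  - destruct (gamma a eps m z) as [p'|]; [|discriminate].
    destruct (IH p' eq_refl) as [-> Hav].
    rewrite fmap_shear in H. destruct (Ceqb _ (a (S m))) eqn:Eb; [discriminate|].
    injection H as <-. split; [reflexivity|].
    intros k Hk. destruct (Nat.eq_dec k (S m)) as [->|Hne].
    + simpl. rewrite Nat.sub_0_r. apply Ceqb_false. exact Eb.
    + apply Hav. lia.
Qed.

Lemma gamma_of_avoids_poles a eps n z : avoids_poles a eps n z -> gamma a eps n z = Some (orbit a eps n z).
Proof.
  induction n as [|m IH]; intros Hav; [reflexivity|].
  simpl. rewrite IH by (intros k Hk; apply Hav; lia).
  rewrite fmap_shear.
  assert (Hm := Hav (S m) ltac:(lia)). simpl in Hm. rewrite Nat.sub_0_r in Hm.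
  apply Ceqb_false in Hm. rewrite Hm. reflexivity.
Qed.

Lemma Cmod_gfun e a u : 0 < e -> u <> a -> Cmod (gfun e a u) = e / Cmod (u - a).
Proof.
  intros he hu. unfold gfun. rewrite Cmod_div by (apply Cminus_neq_0; auto).
  rewrite Cmod_R, Rabs_pos_eq by lra. reflexivity.
Qed.

Lemma Cmod_gfun_le e a u r : 0 < e -> 0 < r -> r <= Cmod (u - a) -> Cmod (gfun e a u) <= e / r.
Proof.
  intros he hr hu. assert (u <> a).
  { intro E; subst. replace (a - a)%C with (RtoC 0) in hu by ring. rewrite Cmod_0 in hu. lra. }
  rewrite Cmod_gfun by auto. unfold Rdiv. apply Rmult_le_compat_l; [lra|]. apply Rinv_le_contravar; lra.
Qed.

Lemma gfun_lipschitz e a u v D : 0 < e -> e <= 1 -> 0 < D -> D <= Cmod (u - a) -> D <= Cmod (v - a) ->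
  Cmod (gfun e a u - gfun e a v) <= Cmod (u - v) / (D * D).
Proof.
  intros he he1 hD hu hv.
  assert (u <> a) by (intro E; subst; replace (a - a)%C with (RtoC 0) in hu by ring; rewrite Cmod_0 in hu; lra).
  assert (v <> a) by (intro E; subst; replace (a - a)%C with (RtoC 0) in hv by ring; rewrite Cmod_0 in hv; lra).
  unfold gfun.
  replace (RtoC e / (u - a) - RtoC e / (v - a))%C with (RtoC e * (v - u) / ((u - a) * (v - a)))%C
    by (field; split; apply Cminus_neq_0; auto).
  rewrite Cmod_div by (apply Cmult_neq_0; apply Cminus_neq_0; auto).
  rewrite !Cmod_mult, Cmod_R, Rabs_pos_eq, (Cmod_minus_sym v u) by lra.
  pose proof (Cmod_ge_0 (u - v)).
  unfold Rdiv. apply Rle_trans with (1 * Cmod (u - v) * / (Cmod (u - a) * Cmod (v - a))).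
  - apply Rmult_le_compat_r; [left; apply Rinv_0_lt_compat; nra|]. nra.
  - rewrite Rmult_1_l. apply Rmult_le_compat_l; auto.
    apply Rinv_le_contravar; [nra|]. apply Rmult_le_compat; lra.
Qed.

Lemma ex_derive_gfun_comp (f : C -> C) e a z : ex_derive f z -> f z <> a ->
  ex_derive (fun w => gfun e a (f w)) z.
Proof.
  intros [l Hl] hne. eexists. unfold gfun, Cdiv.
  apply is_derive_C_mult; [apply is_derive_C_const|].
  apply is_derive_C_inv; [|apply Cminus_neq_0; auto].
  apply is_derive_C_minus; [exact Hl|apply is_derive_C_const].
Qed.

Definition pole (k : nat) : C := RtoC (4 * INR k - 2).
Definition radius (k : nat) : R := 4 * INR k.

Lemma Cmod_pole k : (1 <= k)%nat -> Cmod (pole k) = 4 * INR k - 2.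
Proof. intros h. unfold pole. rewrite Cmod_R. apply Rabs_pos_eq. apply le_INR in h. simpl in h. lra. Qed.

Lemma radius_pos n : (1 <= n)%nat -> 0 < radius n.
Proof. intros hn. unfold radius. apply lt_0_INR in hn. lra. Qed.

Lemma pole_between_radii n : (1 <= n)%nat -> radius (n - 1) < Cmod (pole n) < radius n.
Proof. intros hn. rewrite Cmod_pole by auto. unfold radius. rewrite minus_INR by lia. simpl. lra. Qed.

Lemma far_from_later_poles u i k : (k < i)%nat -> Cmod (u - pole k) < 1 -> 3 <= Cmod (u - pole i).
Proof.
  intros hki hu.
  assert (Cmod (pole i - pole k) = 4 * (INR i - INR k)).
  { unfold pole. rewrite <- RtoC_minus, Cmod_R. apply lt_INR in hki.
    rewrite Rabs_pos_eq; lra. }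
  assert (INR k + 1 <= INR i) by (rewrite <- S_INR; apply le_INR; lia).
  pose proof (Cmod_minus_triangle (pole i) u (pole k)) as T. rewrite (Cmod_minus_sym (pole i) u) in T. lra.
Qed.

(* Points of K_m keep this distance from the poles a_1, ..., a_m (see
   [margin_le_pole_distance] below). *)
Definition margin (m : nat) (e : R) : R := e / ((8 * INR m + 10) * 3 ^ m).

Lemma margin_pos m e : 0 < e -> 0 < margin m e.
Proof.
  intros he. unfold margin. apply Rdiv_lt_0_compat; auto.
  apply Rmult_lt_0_compat; [pose proof (pos_INR m); lra | apply pow_lt; lra].
Qed.

Definition lam (n : nat) (e : R) : R := (1 + 1 / (margin n e * margin n e)) ^ n.

Definition reach (m : nat) (e : R) : R :=
  Rmin (margin m e / 2) (1 / 2) / (1 + 1 / ((margin m e / 2) * (margin m e / 2))) ^ m.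

Lemma one_le_one_plus_inv_sq x : 0 < x -> 1 <= 1 + 1 / (x * x).
Proof.
  intros. assert (0 <= 1 / (x * x)) by (unfold Rdiv; rewrite Rmult_1_l; left; apply Rinv_0_lt_compat; nra).
  lra.
Qed.

Lemma lam_ge_1 n e : 0 < e -> 1 <= lam n e.
Proof. intros he. apply pow_R1_Rle, one_le_one_plus_inv_sq, margin_pos, he. Qed.

Lemma reach_pos m e : 0 < e -> 0 < reach m e.
Proof.
  intros he. pose proof (margin_pos m e he). unfold reach.
  apply Rdiv_lt_0_compat; [apply Rmin_pos; lra|].
  apply pow_lt. pose proof (one_le_one_plus_inv_sq (margin m e / 2) ltac:(lra)). lra.
Qed.

Lemma Rmax_le_step A B Y K : 0 <= A -> 0 <= K -> Y <= B + A * K -> Rmax A Y <= (1 + K) * Rmax A B.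
Proof.
  intros hA hK hY. pose proof (Rmax_l A B). pose proof (Rmax_r A B).
  assert (A * K <= Rmax A B * K) by (apply Rmult_le_compat_r; lra).
  assert (0 <= Rmax A B * K) by (apply Rmult_le_pos; lra).
  apply Rmax_lub; nra.
Qed.

Lemma odd_cases b n : Nat.odd n = b \/ Nat.odd n = negb b.
Proof. destruct b, (Nat.odd n); auto. Qed.

Lemma Cmod_coord_le_norm2 b p : Cmod (coord b p) <= norm2 p.
Proof.
  unfold norm2, coord. pose proof (pow2_ge_0 (Cmod (fst p))). pose proof (pow2_ge_0 (Cmod (snd p))).
  destruct b; rewrite <- sqrt_pow2 at 1 by apply Cmod_ge_0; apply sqrt_le_1_alt; lra.
Qed.

Lemma norm2_le_sum (p : C2) : norm2 p <= Cmod (fst p) + Cmod (snd p).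
Proof.
  unfold norm2. pose proof (Cmod_ge_0 (fst p)). pose proof (Cmod_ge_0 (snd p)).
  rewrite <- (sqrt_pow2 (Cmod (fst p) + Cmod (snd p))) by lra. apply sqrt_le_1_alt. nra.
Qed.

(* Near the bidisk of radius 4(n - 1) + 1/2 the pole a_n = 4n - 2 is at distance at least
   3/2, so the n-th shear is defined there and moves points by at most eps_n. *)
Lemma shear_moves_little n e p : (1 <= n)%nat -> 0 < e <= 1 ->
  (forall b, Cmod (coord b p) <= 4 * INR (n - 1) + 1 / 2) ->
  coord (Nat.odd n) p <> pole n /\ forall b, Cmod (coord b (shear n (pole n) e p) - coord b p) <= e.
Proof.
  intros hn he Hp.
  assert (Dist : 3 / 2 <= Cmod (coord (Nat.odd n) p - pole n)).
  { pose proof (Cmod_minus_ge (pole n) (coord (Nat.odd n) p)) as T. rewrite Cmod_minus_sym in T.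
    rewrite Cmod_pole, minus_INR in * by lia. specialize (Hp (Nat.odd n)). simpl in *. lra. }
  split.
  - intro E. rewrite E, Cmod_minus_diag in Dist. lra.
  - intros b. destruct (odd_cases b n) as [Eo|Eo].
    + rewrite coord_shear_same, Cmod_minus_diag by auto. lra.
    + rewrite coord_shear_other by auto. rewrite <- Eo.
      replace (coord b p + gfun e (pole n) (coord (Nat.odd n) p) - coord b p)%C
        with (gfun e (pole n) (coord (Nat.odd n) p)) by ring.
      eapply Rle_trans; [apply Cmod_gfun_le with (r := 3 / 2); lra|].
      unfold Rdiv. rewrite <- (Rmult_1_r e) at 2. apply Rmult_le_compat_l; [lra|].
      rewrite <- Rinv_1. apply Rinv_le_contravar; lra.
Qed.

Lemma fmap_moves_little n e z : (1 <= n)%nat -> 0 < e <= 1 ->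
  (forall b, Cmod (coord b z) <= 4 * INR (n - 1) + 1 / 2) ->
  exists q, fmap n (pole n) e z = Some q /\ norm2 (sub2 q z) <= 2 * e.
Proof.
  intros hn he Hz. destruct (shear_moves_little n e z hn he Hz) as [Hne Hmove].
  rewrite fmap_shear. apply Ceqb_false in Hne. rewrite Hne.
  eexists. split; [reflexivity|].
  eapply Rle_trans; [apply norm2_le_sum|].
  pose proof (Hmove true). pose proof (Hmove false). simpl in *. lra.
Qed.

Section Orbits.

Variable eps : nat -> R.
Hypothesis eps_pos : forall k, (1 <= k)%nat -> 0 < eps k.
Hypothesis eps_small : forall k, (1 <= k)%nat -> eps k <= 1 / (8 * 2 ^ k).
Hypothesis eps_decr : forall k, (1 <= k)%nat -> eps (S k) <= eps k.

Local Notation orb := (orbit pole eps).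

Definition in_K (m : nat) (z : C) : Prop :=
  avoids_poles pole eps m z /\ forall b, Cmod (coord b (orb m z)) <= radius m.

Definition shift (k : nat) (z : C) : C := gfun (eps k) (pole k) (coord (Nat.odd k) (orb (k - 1) z)).

Lemma eps_le_eighth k : (1 <= k)%nat -> eps k <= 1 / 8.
Proof.
  intros h. assert (1 <= 2 ^ k) by (apply pow_R1_Rle; lra).
  eapply Rle_trans; [apply eps_small; auto|].
  unfold Rdiv. rewrite !Rmult_1_l. apply Rinv_le_contravar; lra.
Qed.

Lemma eps_antitone k m : (1 <= k <= m)%nat -> eps m <= eps k.
Proof. intros [h1 h2]. induction h2; [lra|]. specialize (eps_decr m ltac:(lia)). lra. Qed.

Fixpoint eps_sum (k : nat) : R :=
  match k with O => 0 | S j => eps_sum j + eps (S j) end.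

Lemma eps_sum_bounds j k : (j <= k)%nat -> 0 <= eps_sum j <= eps_sum k /\ eps_sum k <= 1 / 8.
Proof.
  assert (Mono : forall j k, (j <= k)%nat -> eps_sum j <= eps_sum k).
  { intros j' k' h. induction h; [lra|]. simpl. pose proof (eps_pos (S m) ltac:(lia)). lra. }
  assert (Top : forall i, eps_sum i <= 1 / 8 - 1 / (8 * 2 ^ i)).
  { induction i as [|i IH]; simpl; [lra|].
    pose proof (eps_small (S i) ltac:(lia)) as He. simpl in He.
    assert (0 < 2 ^ i) by (apply pow_lt; lra).
    replace (1 / 8 - 1 / (8 * (2 * 2 ^ i)))
      with (1 / 8 - 1 / (8 * 2 ^ i) + 1 / (8 * (2 * 2 ^ i))) by (field; lra). lra. }
  intros h. specialize (Mono 0%nat j ltac:(lia)) as M0. simpl in M0.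
  pose proof (Mono j k h). pose proof (Top k).
  assert (0 < 1 / (8 * 2 ^ k)) by (apply Rdiv_lt_0_compat; [lra|]; pose proof (pow_lt 2 k); lra).
  lra.
Qed.

Lemma coord_orbit_same b j z : Nat.odd (S j) = b -> coord b (orb (S j) z) = coord b (orb j z).
Proof. apply coord_shear_same. Qed.

Lemma coord_orbit_other b j z : Nat.odd (S j) = negb b ->
  coord b (orb (S j) z) = (coord b (orb j z) + shift (S j) z)%C.
Proof.
  intros E. unfold shift. simpl (S j - 1)%nat. rewrite Nat.sub_0_r, E.
  apply coord_shear_other. exact E.
Qed.

Lemma Cmod_shift_le_eps j z : 2 <= Cmod (coord (Nat.odd (S j)) (orb j z) - pole (S j)) ->
  Cmod (shift (S j) z) <= eps (S j).
Proof.
  intros D. pose proof (eps_pos (S j) ltac:(lia)). unfold shift. simpl (S j - 1)%nat. rewrite Nat.sub_0_r.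
  eapply Rle_trans; [apply Cmod_gfun_le with (r := 2); auto; lra|]. lra.
Qed.

(* While coordinate b stays outside the disk of radius 4m + 1 and the other coordinate stays
   away from the poles that could move coordinate b, every shear moves either coordinate by
   at most eps_k. *)
Lemma orbit_escape_invariant b m j z i : (j + i <= m)%nat -> 4 * INR m + 1 <= Cmod (coord b (orb j z)) ->
  (forall k, (j < k <= m)%nat -> Nat.odd k = negb b ->
     3 <= Cmod (coord (negb b) (orb j z) - pole k)) ->
  Cmod (coord (negb b) (orb (j + i) z) - coord (negb b) (orb j z)) <= eps_sum (j + i) - eps_sum j /\
  Cmod (coord b (orb j z)) - (eps_sum (j + i) - eps_sum j) <= Cmod (coord b (orb (j + i) z)).
Proof.
  intros him hb hfar. induction i as [|i IH].
  { rewrite Nat.add_0_r, Cmod_minus_diag. lra. }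
  destruct (IH ltac:(lia)) as [Io Ib].
  replace (j + S i)%nat with (S (j + i)) by lia. set (l := (j + i)%nat) in *.
  destruct (eps_sum_bounds j l ltac:(lia)) as [[S0 S1] S2].
  simpl eps_sum.
  pose proof (eps_pos (S l) ltac:(lia)) as ep.
  assert (HS : INR (S l) <= INR m) by (apply le_INR; lia).
  destruct (odd_cases b (S l)) as [Eo|Eo].
  - rewrite (coord_orbit_same b l z Eo).
    rewrite (coord_orbit_other (negb b) l z ltac:(rewrite Bool.negb_involutive; auto)).
    assert (Sh : Cmod (shift (S l) z) <= eps (S l)).
    { apply Cmod_shift_le_eps. rewrite Eo.
      pose proof (Cmod_minus_ge (coord b (orb l z)) (pole (S l))) as T. rewrite Cmod_pole in T by lia. lra. }
    pose proof (Cmod_minus_triangle (coord (negb b) (orb l z) + shift (S l) z)%C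
                                    (coord (negb b) (orb l z)) (coord (negb b) (orb j z))) as T.
    replace (coord (negb b) (orb l z) + shift (S l) z - coord (negb b) (orb l z))%C
      with (shift (S l) z) in T by ring.
    split; lra.
  - rewrite (coord_orbit_same (negb b) l z Eo), (coord_orbit_other b l z Eo).
    assert (Sh : Cmod (shift (S l) z) <= eps (S l)).
    { apply Cmod_shift_le_eps. rewrite Eo.
      pose proof (hfar (S l) ltac:(lia) Eo).
      pose proof (Cmod_minus_triangle (coord (negb b) (orb j z)) (coord (negb b) (orb l z)) (pole (S l))) as T.
      rewrite (Cmod_minus_sym (coord (negb b) (orb j z)) (coord (negb b) (orb l z))) in T. lra. }
    pose proof (Cmod_plus_ge (coord b (orb l z)) (shift (S l) z)). split; lra.
Qed.

Lemma orbit_escapes b m j z : (j <= m)%nat -> 4 * INR m + 1 <= Cmod (coord b (orb j z)) ->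
  (forall k, (j < k <= m)%nat -> Nat.odd k = negb b ->
     3 <= Cmod (coord (negb b) (orb j z) - pole k)) ->
  4 * INR m < Cmod (coord b (orb m z)).
Proof.
  intros hjm hb hfar.
  destruct (orbit_escape_invariant b m j z (m - j) ltac:(lia) hb hfar) as [_ Ib].
  replace (j + (m - j))%nat with m in Ib by lia.
  destruct (eps_sum_bounds j m hjm). lra.
Qed.

Lemma in_K_iff m z : (1 <= m)%nat -> (inK pole eps radius m z <-> in_K m z).
Proof.
  intros hm. destruct m as [|m']; [lia|]. unfold inK, in_K, inB. split.
  - intros [p [Hg [H1 H2]]]. destruct (gamma_Some _ _ _ _ _ Hg) as [-> Hav].
    split; auto. intros []; auto.
  - intros [Hav Hb]. exists (orb (S m') z). split; [apply gamma_of_avoids_poles; auto|].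
    split; [apply (Hb true) | apply (Hb false)].
Qed.

Lemma in_K_point_bound m z : (1 <= m)%nat -> in_K m z -> Cmod z <= 4 * INR m + 1.
Proof.
  intros hm [_ Hb]. apply Rnot_lt_le. intro Hz.
  assert (4 * INR m < Cmod (coord true (orb m z))).
  { apply (orbit_escapes true m 0 z); [lia|simpl; lra|].
    intros k Hk Ho. simpl. replace (RtoC 0 - pole k)%C with (- pole k)%C by ring.
    rewrite Cmod_opp, Cmod_pole by lia.
    assert (k <> 1%nat) by (intro; subst; discriminate).
    assert (2 <= INR k) by (replace 2 with (INR 2) by (simpl; lra); apply le_INR; lia). lra. }
  specialize (Hb true). unfold radius in Hb. lra.
Qed.

Lemma orbit_drift z C0 j : 0 <= C0 ->
  (forall i, (1 <= i <= j)%nat -> Cmod (shift i z) <= C0 * 3 ^ (i - 1)) ->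
  forall b, Cmod (coord b (orb j z) - coord b (orb 0 z)) <= C0 * (3 ^ j - 1) / 2.
Proof.
  intros hC H. induction j as [|j IH]; intros b.
  - rewrite Cmod_minus_diag. simpl. lra.
  - specialize (IH (fun i Hi => H i ltac:(lia)) b).
    pose proof (H (S j) ltac:(lia)) as HS. simpl (S j - 1)%nat in HS. rewrite Nat.sub_0_r in HS.
    assert (0 <= C0 * 3 ^ j) by (apply Rmult_le_pos; [lra|apply pow_le; lra]).
    replace (C0 * (3 ^ S j - 1) / 2) with (C0 * (3 ^ j - 1) / 2 + C0 * 3 ^ j) by (simpl; field).
    destruct (odd_cases b (S j)) as [Eo|Eo].
    + rewrite (coord_orbit_same b j z Eo). lra.
    + rewrite (coord_orbit_other b j z Eo).
      replace (coord b (orb j z) + shift (S j) z - coord b (orb 0 z))%C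
        with ((coord b (orb j z) - coord b (orb 0 z)) + shift (S j) z)%C by ring.
      eapply Rle_trans; [apply Cmod_triangle|]. lra.
Qed.

Lemma Cmod_shift k z : (1 <= k)%nat -> coord (Nat.odd k) (orb (k - 1) z) <> pole k ->
  Cmod (shift k z) = eps k / Cmod (coord (Nat.odd k) (orb (k - 1) z) - pole k).
Proof. intros hk hne. apply Cmod_gfun; auto. Qed.

(* If the k-th shift were larger than (8m + 10) 3^(k-1), the shifted coordinate would be
   thrown outside the bidisk of radius 4m + 1 while the other coordinate sits next to
   the pole a_k, hence far from all later poles; by [orbit_escapes] the orbit would
   miss B_m. *)
Lemma shift_bound m z : (1 <= m)%nat -> in_K m z ->
  forall k, (1 <= k <= m)%nat -> Cmod (shift k z) <= (8 * INR m + 10) * 3 ^ (k - 1).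
Proof.
  intros hm HK. set (C0 := 8 * INR m + 10).
  assert (hC : 10 <= C0) by (unfold C0; pose proof (pos_INR m); lra).
  assert (Hz := in_K_point_bound m z hm HK). destruct HK as [Hav Hb].
  assert (Main : forall k, (k <= m)%nat -> forall i, (1 <= i <= k)%nat -> Cmod (shift i z) <= C0 * 3 ^ (i - 1)).
  { induction k as [|j IH]; intros hk i Hi; [lia|].
    destruct (Nat.eq_dec i (S j)) as [->|Hne]; [|apply IH; lia].
    simpl (S j - 1)%nat. rewrite Nat.sub_0_r.
    apply Rnot_lt_le. intro Hbig. set (b := Nat.odd (S j)).
    assert (h3 : 1 <= 3 ^ j) by (apply pow_R1_Rle; lra).
    assert (Hne' := Hav (S j) ltac:(lia)).
    assert (Hnear : Cmod (coord b (orb j z) - pole (S j)) < 1).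
    { pose proof (Cmod_shift (S j) z ltac:(lia) Hne') as E. simpl (S j - 1)%nat in E, Hne'.
      rewrite Nat.sub_0_r in E, Hne'. fold b in E, Hne'. rewrite E in Hbig.
      pose proof (Cmod_minus_gt_0 _ _ Hne'). pose proof (eps_le_eighth (S j) ltac:(lia)).
      apply Rnot_le_lt. intro Hd. apply (Rlt_not_le _ _ Hbig).
      apply Rle_trans with (eps (S j)); [|nra].
      unfold Rdiv. rewrite <- (Rmult_1_r (eps (S j))) at 2.
      apply Rmult_le_compat_l; [pose proof (eps_pos (S j) ltac:(lia)); lra|].
      rewrite <- Rinv_1. apply Rinv_le_contravar; lra. }
    pose proof (orbit_drift z C0 j ltac:(lra) (fun i Hi => IH ltac:(lia) i Hi) (negb b)) as Hdrift.
    assert (Hz0 : Cmod (coord (negb b) (orb 0 z)) <= Cmod z)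
      by (destruct b; simpl; rewrite ?Cmod_0; [apply Cmod_ge_0|lra]).
    assert (4 * INR m < Cmod (coord (negb b) (orb m z))).
    { apply (orbit_escapes (negb b) m (S j) z hk).
      - rewrite (coord_orbit_other (negb b) j z ltac:(rewrite Bool.negb_involutive; reflexivity)).
        pose proof (Cmod_plus_ge (shift (S j) z) (coord (negb b) (orb j z))) as T.
        rewrite Cplus_comm in T.
        pose proof (Cmod_minus_ge (coord (negb b) (orb j z)) (coord (negb b) (orb 0 z))).
        assert (C0 <= C0 * (3 ^ j + 1) / 2) by nra. unfold C0 in *. lra.
      - intros k Hk Ho. rewrite Bool.negb_involutive in Ho |- *.
        rewrite (coord_orbit_same b j z eq_refl). apply (far_from_later_poles _ k (S j)); auto. lia. }
    specialize (Hb (negb b)). unfold radius in Hb. lra. }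
  intros k Hk. apply (Main m (le_n m) k Hk).
Qed.

Lemma margin_le_pole_distance m z k : (1 <= m)%nat -> in_K m z -> (1 <= k <= m)%nat ->
  margin m (eps m) <= Cmod (coord (Nat.odd k) (orb (k - 1) z) - pole k).
Proof.
  intros hm HK Hk. pose proof (shift_bound m z hm HK k Hk) as Hn.
  destruct HK as [Hav _]. pose proof (Hav k Hk) as hne.
  rewrite Cmod_shift in Hn by (auto; lia).
  set (d := Cmod (coord (Nat.odd k) (orb (k - 1) z) - pole k)) in *.
  assert (0 < d) by (apply Cmod_minus_gt_0; auto).
  pose proof (eps_antitone k m Hk). pose proof (eps_pos m hm). pose proof (eps_pos k ltac:(lia)).
  set (C0 := 8 * INR m + 10) in *. assert (10 <= C0) by (unfold C0; pose proof (pos_INR m); lra).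
  assert (3 ^ (k - 1) <= 3 ^ m) by (apply Rle_pow; [lra|lia]).
  assert (1 <= 3 ^ (k - 1)) by (apply pow_R1_Rle; lra).
  unfold margin. fold C0.
  apply Rle_trans with (eps k / (C0 * 3 ^ (k - 1))).
  - unfold Rdiv. apply Rmult_le_compat; try lra; [left; apply Rinv_0_lt_compat; nra|].
    apply Rinv_le_contravar; nra.
  - apply Rmult_le_reg_r with (C0 * 3 ^ (k - 1) / d); [apply Rdiv_lt_0_compat; nra|].
    replace (eps k / (C0 * 3 ^ (k - 1)) * (C0 * 3 ^ (k - 1) / d)) with (eps k / d) by (field; nra).
    replace (d * (C0 * 3 ^ (k - 1) / d)) with (C0 * 3 ^ (k - 1)) by (field; lra). lra.
Qed.

Definition dmax (k : nat) (z w : C) : R :=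
  Rmax (Cmod (coord true (orb k z) - coord true (orb k w)))
       (Cmod (coord false (orb k z) - coord false (orb k w))).

Lemma dmax_coord b k z w : dmax k z w =
  Rmax (Cmod (coord b (orb k z) - coord b (orb k w))) (Cmod (coord (negb b) (orb k z) - coord (negb b) (orb k w))).
Proof. unfold dmax. destruct b; [reflexivity|apply Rmax_comm]. Qed.

Lemma coord_minus_le_dmax b k z w : Cmod (coord b (orb k z) - coord b (orb k w)) <= dmax k z w.
Proof. rewrite (dmax_coord b). apply Rmax_l. Qed.

(* A shear is the identity plus a 1/D^2-Lipschitz function of the coordinate it fixes. *)
Lemma dmax_step j z w D : 0 < D ->
  D <= Cmod (coord (Nat.odd (S j)) (orb j z) - pole (S j)) ->
  D <= Cmod (coord (Nat.odd (S j)) (orb j w) - pole (S j)) ->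
  dmax (S j) z w <= (1 + 1 / (D * D)) * dmax j z w /\
  dmax j z w <= (1 + 1 / (D * D)) * dmax (S j) z w.
Proof.
  intros hD hz hw. set (b := Nat.odd (S j)) in *.
  assert (Eb : Nat.odd (S j) = negb (negb b)) by (rewrite Bool.negb_involutive; reflexivity).
  rewrite !(dmax_coord b), !(coord_orbit_same b j _ eq_refl), !(coord_orbit_other (negb b) j _ Eb).
  unfold shift. simpl (S j - 1)%nat. rewrite Nat.sub_0_r. fold b.
  pose proof (eps_pos (S j) ltac:(lia)). pose proof (eps_le_eighth (S j) ltac:(lia)).
  pose proof (gfun_lipschitz (eps (S j)) (pole (S j)) _ _ D ltac:(lra) ltac:(lra) hD hz hw) as G.
  set (A := Cmod (coord b (orb j z) - coord b (orb j w))) in *.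
  set (g := (gfun (eps (S j)) (pole (S j)) (coord b (orb j z)) - gfun (eps (S j)) (pole (S j)) (coord b (orb j w)))%C) in *.
  set (u := (coord (negb b) (orb j z) - coord (negb b) (orb j w))%C).
  assert (K0 : 0 <= 1 / (D * D)) by (pose proof (one_le_one_plus_inv_sq D hD); lra).
  assert (Hg : Cmod g <= A * (1 / (D * D))) by (unfold Rdiv in *; lra).
  replace (coord (negb b) (orb j z) + _ - (coord (negb b) (orb j w) + _))%C with (u + g)%C
    by (unfold u, g; ring).
  split; apply Rmax_le_step; auto; try apply Cmod_ge_0.
  - eapply Rle_trans; [apply Cmod_triangle|]. lra.
  - pose proof (Cmod_minus_le (u + g) g) as T. replace (u + g - g)%C with u in T by ring. lra.
Qed.

Lemma orbit_inverse_lipschitz n z w : (1 <= n)%nat -> in_K n z -> in_K n w ->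
  Cmod (z - w) <= lam n (eps n) * dmax n z w.
Proof.
  intros hn Kz Kw. set (D := margin n (eps n)). assert (hD : 0 < D) by apply margin_pos, eps_pos, hn.
  set (L := 1 + 1 / (D * D)). assert (hL := one_le_one_plus_inv_sq D hD). fold L in hL.
  assert (Back : forall k, (k <= n)%nat -> dmax 0 z w <= L ^ k * dmax k z w).
  { induction k as [|k IH]; intros hk; [simpl; lra|].
    pose proof (margin_le_pole_distance n z (S k) hn Kz ltac:(lia)) as dz.
    pose proof (margin_le_pole_distance n w (S k) hn Kw ltac:(lia)) as dw.
    simpl (S k - 1)%nat in dz, dw. rewrite Nat.sub_0_r in dz, dw.
    destruct (dmax_step k z w D hD dz dw) as [_ B]. fold L in B.
    assert (0 <= L ^ k) by (apply pow_le; lra).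
    eapply Rle_trans; [apply IH; lia|]. simpl.
    replace (L * L ^ k * dmax (S k) z w) with (L ^ k * (L * dmax (S k) z w)) by ring.
    apply Rmult_le_compat_l; auto. }
  eapply Rle_trans; [apply (coord_minus_le_dmax true 0)|]. apply Back. lia.
Qed.

(* Inductively the orbit of w stays within margin_m / 2 of that of z, hence off the poles;
   [reach] is chosen so that the accumulated factors (1 + 4/margin_m^2)^k keep it there. *)
Lemma orbit_stays_close m z w : (1 <= m)%nat -> in_K m z -> Cmod (w - z) <= reach m (eps m) ->
  avoids_poles pole eps m w /\ dmax m w z <= 1 / 2.
Proof.
  intros hm Kz Hw.
  set (D := margin m (eps m)). assert (hD : 0 < D) by apply margin_pos, eps_pos, hm.
  set (Q := 1 + 1 / ((D / 2) * (D / 2))). assert (hQ := one_le_one_plus_inv_sq (D / 2) ltac:(lra)).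
  fold Q in hQ. set (r := reach m (eps m)) in *.
  assert (Er : r * Q ^ m = Rmin (D / 2) (1 / 2)) by (unfold r, reach; fold D Q; field; apply pow_nonzero; lra).
  assert (hr : 0 <= r) by (left; apply reach_pos, eps_pos, hm).
  assert (Close : forall k, (k <= m)%nat ->
            (forall i, (1 <= i <= k)%nat -> coord (Nat.odd i) (orb (i - 1) w) <> pole i) /\
            dmax k w z <= r * Q ^ k).
  { induction k as [|k IH]; intros hk.
    - split; [intros; lia|]. unfold dmax. simpl. rewrite Cmod_minus_diag, Rmult_1_r.
      apply Rmax_lub; auto.
    - destruct (IH ltac:(lia)) as [G1 G2].
      assert (Dk : dmax k w z <= D / 2).
      { apply Rle_trans with (r * Q ^ m); [|rewrite Er; apply Rmin_l].
        eapply Rle_trans; [exact G2|]. apply Rmult_le_compat_l; auto. apply Rle_pow; auto; lia. }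
      pose proof (margin_le_pole_distance m z (S k) hm Kz ltac:(lia)) as dz. fold D in dz.
      simpl (S k - 1)%nat in dz. rewrite Nat.sub_0_r in dz.
      assert (dw : D / 2 <= Cmod (coord (Nat.odd (S k)) (orb k w) - pole (S k))).
      { set (b := Nat.odd (S k)) in *.
        pose proof (coord_minus_le_dmax b k w z) as Hb.
        pose proof (Cmod_minus_triangle (coord b (orb k z)) (coord b (orb k w)) (pole (S k))) as T.
        rewrite (Cmod_minus_sym (coord b (orb k z)) (coord b (orb k w))) in T. lra. }
      split.
      + intros i Hi. destruct (Nat.eq_dec i (S k)) as [->|Hne]; [|apply G1; lia].
        simpl (S k - 1)%nat. rewrite Nat.sub_0_r. intro E. rewrite E, Cmod_minus_diag in dw. lra.
      + destruct (dmax_step k w z (D / 2) ltac:(lra) dw ltac:(lra)) as [F _]. fold Q in F.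
        simpl. eapply Rle_trans; [exact F|].
        replace (r * (Q * Q ^ k)) with (Q * (r * Q ^ k)) by ring. apply Rmult_le_compat_l; lra. }
  destruct (Close m (le_n m)) as [Gm Dm]. split; [exact Gm|].
  rewrite Er in Dm. pose proof (Rmin_r (D / 2) (1 / 2)). lra.
Qed.

Lemma in_K_neighbourhood m z w : (1 <= m)%nat -> in_K m z -> Cmod (w - z) <= reach m (eps m) ->
  in_K (S m) w.
Proof.
  intros hm Kz Hw. destruct (orbit_stays_close m z w hm Kz Hw) as [Hav Hd].
  assert (Hp : forall b, Cmod (coord b (orb m w)) <= 4 * INR (S m - 1) + 1 / 2).
  { intros b. simpl (S m - 1)%nat. rewrite Nat.sub_0_r.
    pose proof (coord_minus_le_dmax b m w z). destruct Kz as [_ Kb]. specialize (Kb b). unfold radius in Kb.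
    pose proof (Cmod_minus_ge (coord b (orb m w)) (coord b (orb m z))). lra. }
  pose proof (eps_pos (S m) ltac:(lia)). pose proof (eps_le_eighth (S m) ltac:(lia)).
  destruct (shear_moves_little (S m) (eps (S m)) (orb m w) ltac:(lia) ltac:(lra) Hp) as [Hne Hmove].
  split.
  - intros i Hi. destruct (Nat.eq_dec i (S m)) as [->|Hne']; [|apply Hav; lia].
    simpl (S m - 1)%nat. rewrite Nat.sub_0_r. exact Hne.
  - intros b. specialize (Hmove b). specialize (Hp b). simpl (S m - 1)%nat in Hp.
    rewrite Nat.sub_0_r in Hp. unfold radius. rewrite S_INR.
    pose proof (Cmod_minus_ge (coord b (orb (S m) w)) (coord b (orb m w))). simpl orbit in *. lra.
Qed.

Lemma orbit_holomorphic n z : avoids_poles pole eps n z ->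
  forall b, ex_derive (fun w => coord b (orb n w)) z.
Proof.
  induction n as [|m IH]; intros Hav b.
  - destruct b; eexists.
    + apply (is_derive_C_ext (fun w => w)); [reflexivity|apply is_derive_C_id].
    + apply (is_derive_C_ext (fun _ => RtoC 0)); [reflexivity|apply is_derive_C_const].
  - assert (IHm := IH (fun k Hk => Hav k ltac:(lia))).
    destruct (odd_cases b (S m)) as [Eo|Eo].
    + destruct (IHm b) as [l Hl]. exists l.
      apply (is_derive_C_ext (fun w => coord b (orb m w))); [|exact Hl].
      intros w. symmetry. apply coord_orbit_same, Eo.
    + assert (Hne := Hav (S m) ltac:(lia)). simpl (S m - 1)%nat in Hne. rewrite Nat.sub_0_r, Eo in Hne.
      destruct (IHm b) as [l Hl].
      destruct (ex_derive_gfun_comp (fun w => coord (negb b) (orb m w)) (eps (S m)) (pole (S m)) z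
                  (IHm (negb b)) Hne) as [l' Hl'].
      exists (l + l')%C.
      apply (is_derive_C_ext (fun w => coord b (orb m w) + shift (S m) w)%C).
      * intros w. symmetry. apply coord_orbit_other, Eo.
      * apply is_derive_C_plus; auto. unfold shift. simpl (S m - 1)%nat. rewrite Nat.sub_0_r, Eo. exact Hl'.
Qed.

(* Compare orbits of z and of z + r for small r > 0 through [orbit_inverse_lipschitz]. *)
Lemma orbit_derivative_lower m z l1 l2 : (1 <= m)%nat -> in_K m z ->
  is_derive (fun w => coord true (orb (S m) w)) z l1 ->
  is_derive (fun w => coord false (orb (S m) w)) z l2 ->
  1 <= lam (S m) (eps (S m)) * (Cmod l1 + Cmod l2).
Proof.
  intros hm Kz H1 H2. set (L := lam (S m) (eps (S m))).
  assert (hL : 1 <= L) by (apply lam_ge_1, eps_pos; lia).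
  pose proof (reach_pos m (eps m) (eps_pos m hm)) as hr.
  assert (Kz' : in_K (S m) z) by (apply (in_K_neighbourhood m z z hm Kz); rewrite Cmod_minus_diag; lra).
  assert (Key : forall e, 0 < e -> 1 <= L * (Cmod l1 + Cmod l2 + 2 * e)).
  { intros e he.
    destruct (is_derive_C_approx _ _ _ H1 e he) as [d1 [hd1 D1]].
    destruct (is_derive_C_approx _ _ _ H2 e he) as [d2 [hd2 D2]].
    set (r := Rmin (Rmin d1 d2) (reach m (eps m)) / 2).
    pose proof (Rmin_l (Rmin d1 d2) (reach m (eps m))). pose proof (Rmin_r (Rmin d1 d2) (reach m (eps m))).
    pose proof (Rmin_l d1 d2). pose proof (Rmin_r d1 d2).
    assert (hr0 : 0 < r) by (unfold r; apply Rdiv_lt_0_compat; [repeat apply Rmin_pos|]; lra).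
    set (w := (z + RtoC r)%C).
    assert (Ew : Cmod (w - z) = r).
    { unfold w. replace (z + RtoC r - z)%C with (RtoC r) by ring. rewrite Cmod_R. apply Rabs_pos_eq. lra. }
    assert (Kw : in_K (S m) w) by (apply (in_K_neighbourhood m z w hm Kz); unfold r in Ew; lra).
    pose proof (orbit_inverse_lipschitz (S m) w z ltac:(lia) Kw Kz') as Lp. fold L in Lp. rewrite Ew in Lp.
    specialize (D1 w ltac:(unfold r in Ew; lra)). specialize (D2 w ltac:(unfold r in Ew; lra)).
    rewrite Ew in D1, D2.
    assert (B : forall (f : C -> C) l, Cmod (f w - f z - l * (w - z)) <= e * r ->
              Cmod (f w - f z) <= (Cmod l + e) * r).
    { intros f l Hf. replace (f w - f z)%C with ((f w - f z - l * (w - z)) + l * (w - z))%C by ring.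
      eapply Rle_trans; [apply Cmod_triangle|]. rewrite Cmod_mult, Ew. lra. }
    assert (dmax (S m) w z <= (Cmod l1 + Cmod l2 + 2 * e) * r).
    { pose proof (B (fun u => coord true (orb (S m) u)) l1 D1).
      pose proof (B (fun u => coord false (orb (S m) u)) l2 D2). pose proof (Cmod_ge_0 l1). pose proof (Cmod_ge_0 l2).
      unfold dmax. apply Rmax_lub; nra. }
    apply Rmult_le_reg_r with r; [lra|]. rewrite Rmult_1_l, Rmult_assoc.
    eapply Rle_trans; [exact Lp|]. apply Rmult_le_compat_l; lra. }
  apply le_epsilon. intros e he.
  specialize (Key (e / (2 * L)) ltac:(apply Rdiv_lt_0_compat; lra)).
  replace (L * (Cmod l1 + Cmod l2 + 2 * (e / (2 * L)))) with (L * (Cmod l1 + Cmod l2) + e) in Key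
    by (field; lra). exact Key.
Qed.

(* The Cauchy estimate on squares of half-side reach/4 around points near K_m. *)
Lemma cauchy_near_K m (phi : C -> C) c z q l : (1 <= m)%nat -> in_K m z ->
  Cmod (q - z) <= reach m (eps m) / 2 ->
  (forall w, in_K (S m) w -> ex_derive phi w /\ Cmod (phi w) <= c) ->
  is_derive phi q l -> Cmod l <= 16 * c / reach m (eps m).
Proof.
  intros hm Kz Hq Hphi Hl. set (r := reach m (eps m)) in *.
  assert (hr : 0 < r) by apply reach_pos, eps_pos, hm.
  assert (Near : forall x y, Rabs (x - fst q) <= r / 4 -> Rabs (y - snd q) <= r / 4 -> in_K (S m) (x, y)).
  { intros x y hx hy. apply (in_K_neighbourhood m z (x, y) hm Kz).
    pose proof (Cmod_pair_minus_le x y (fst q) (snd q)).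
    pose proof (Cmod_minus_triangle (x, y) q z). destruct q. simpl in *. fold r. lra. }
  destruct q as [q1 q2].
  replace (16 * c / r) with (2 * (2 * c) / (r / 4)) by (field; lra).
  apply (cauchy_estimate phi q1 q2 (r / 4) (2 * c) l); auto; [lra| |].
  - intros x y hx hy. apply Hphi, Near; auto.
  - intros x y hx hy. destruct (Hphi _ (Near x y hx hy)) as [_ B1].
    destruct (Hphi (q1, q2) (Near q1 q2 ltac:(rewrite Rminus_eq_0, Rabs_R0; lra)
                                    ltac:(rewrite Rminus_eq_0, Rabs_R0; lra))) as [_ B2].
    eapply Rle_trans; [apply Cmod_minus_le|]. lra.
Qed.

Lemma lipschitz_near_K m (phi : C -> C) c z w : (1 <= m)%nat -> in_K m z ->
  Cmod (w - z) <= reach m (eps m) / 2 ->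
  (forall u, in_K (S m) u -> ex_derive phi u /\ Cmod (phi u) <= c) ->
  Cmod (phi w - phi z) <= 16 * c / reach m (eps m) * Cmod (w - z).
Proof.
  intros hm Kz Hw Hphi. pose proof (reach_pos m (eps m) (eps_pos m hm)) as hr.
  assert (Kz' : in_K (S m) z) by (apply (in_K_neighbourhood m z z hm Kz); rewrite Cmod_minus_diag; lra).
  assert (hc : 0 <= c) by (destruct (Hphi z Kz') as [_ B]; pose proof (Cmod_ge_0 (phi z)); lra).
  apply Cmod_mean_value; [apply Rmult_le_pos; [lra|left; apply Rinv_0_lt_compat; lra]|].
  intros t Ht.
  assert (Hp : Cmod (segment z w t - z) <= reach m (eps m) / 2).
  { replace z with (segment z w 0) at 2 by (unfold segment; ring).
    rewrite Cmod_segment_minus, Rminus_0_r, Rabs_pos_eq by lra.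
    pose proof (Cmod_ge_0 (w - z)). nra. }
  assert (Kp : in_K (S m) (segment z w t)) by (apply (in_K_neighbourhood m z _ hm Kz); lra).
  destruct (Hphi _ Kp) as [[l Hl] _]. exists l. split; auto.
  apply (cauchy_near_K m phi c z _ l hm Kz Hp Hphi Hl).
Qed.

Definition error (h : C -> C2) (n : nat) (b : bool) (w : C) : C := (coord b (h w) - coord b (orb n w))%C.

Lemma error_bound m h c : holo_off_poles pole eps (S m) h ->
  (forall z, inK pole eps radius (S m) z ->
     exists p, gamma pole eps (S m) z = Some p /\ norm2 (sub2 p (h z)) <= c) ->
  forall b w, in_K (S m) w -> ex_derive (error h (S m) b) w /\ Cmod (error h (S m) b w) <= c.
Proof.
  intros Hh Hclose b w Kw. split.
  - destruct Kw as [Hav _].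
    assert (Hg : gamma pole eps (S m) w <> None) by (rewrite gamma_of_avoids_poles; auto; discriminate).
    destruct (Hh w Hg) as [[l1 H1] [l2 H2]].
    destruct (orbit_holomorphic (S m) w Hav b) as [l Hl].
    exists ((if b then l1 else l2) - l)%C. apply is_derive_C_minus; [destruct b; assumption|exact Hl].
  - destruct (Hclose w (proj2 (in_K_iff (S m) w ltac:(lia)) Kw)) as [p [Hg Hn]].
    destruct (gamma_Some _ _ _ _ _ Hg) as [-> _].
    pose proof (Cmod_coord_le_norm2 b (sub2 (orb (S m) w) (h w))).
    unfold error. rewrite Cmod_minus_sym. destruct b; simpl in *; lra.
Qed.

Section CloseMaps.

Variables (m : nat) (h : C -> C2) (c : R).
Hypothesis m_pos : (1 <= m)%nat.
Hypothesis c_small : lam (S m) (eps (S m)) * c < reach m (eps m) / 64.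
Hypothesis error_small : forall b w, in_K (S m) w -> ex_derive (error h (S m) b) w /\ Cmod (error h (S m) b w) <= c.

(* Two points of K_m with the same image are either close, and then the Lipschitz bound
   16 c / reach on the error contradicts the inverse Lipschitz bound on the orbit map, or
   far apart, and then the error c is too small to compensate. *)
Lemma close_map_injective z w : in_K m z -> in_K m w -> h z = h w -> z = w.
Proof.
  intros Kz Kw Heq. set (L := lam (S m) (eps (S m))) in *. set (r := reach m (eps m)) in *.
  assert (hr : 0 < r) by apply reach_pos, eps_pos, m_pos.
  assert (hL : 1 <= L) by (apply lam_ge_1, eps_pos; lia).
  assert (Kz' : in_K (S m) z) by (apply (in_K_neighbourhood m z z m_pos Kz); rewrite Cmod_minus_diag; fold r; lra).
  assert (Kw' : in_K (S m) w) by (apply (in_K_neighbourhood m w w m_pos Kw); rewrite Cmod_minus_diag; fold r; lra).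
  assert (hc : 0 <= c) by (destruct (error_small true z Kz') as [_ B]; pose proof (Cmod_ge_0 (error h (S m) true z)); lra).
  assert (Swap : forall b, (coord b (orb (S m) z) - coord b (orb (S m) w))%C = (error h (S m) b w - error h (S m) b z)%C)
    by (intros b; unfold error; rewrite Heq; ring).
  pose proof (orbit_inverse_lipschitz (S m) z w ltac:(lia) Kz' Kw') as Lp. fold L in Lp.
  rewrite Cmod_minus_sym in Lp. pose proof (Cmod_ge_0 (w - z)) as Hd0. set (d := Cmod (w - z)) in *.
  destruct (Rlt_le_dec d (r / 2)) as [Hsmall|Hbig].
  - assert (M : forall b, Cmod (coord b (orb (S m) z) - coord b (orb (S m) w)) <= 16 * c / r * d).
    { intros b. rewrite Swap. apply (lipschitz_near_K m _ c z w m_pos Kz ltac:(fold r d; lra)).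
      intros u Ku. apply error_small, Ku. }
    assert (dmax (S m) z w <= 16 * c / r * d) by (unfold dmax; apply Rmax_lub; apply M).
    assert (Hk : L * (16 * c / r) < 1 / 4).
    { replace (L * (16 * c / r)) with (16 * (L * c) / r) by (field; lra).
      apply Rmult_lt_reg_r with r; auto. unfold Rdiv. rewrite Rmult_assoc, Rinv_l by lra. lra. }
    assert (d <= L * (16 * c / r) * d) by (eapply Rle_trans; [exact Lp|]; rewrite Rmult_assoc; apply Rmult_le_compat_l; lra).
    assert (Hd : d <= 0) by nra.
    assert (E : (w - z)%C = RtoC 0) by (apply Cmod_eq_0; fold d; lra).
    replace w with ((w - z) + z)%C by ring. rewrite E. ring.
  - exfalso.
    assert (M : forall b, Cmod (coord b (orb (S m) z) - coord b (orb (S m) w)) <= 2 * c).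
    { intros b. rewrite Swap. eapply Rle_trans; [apply Cmod_minus_le|].
      destruct (error_small b w Kw') as [_ B1]. destruct (error_small b z Kz') as [_ B2]. lra. }
    assert (dmax (S m) z w <= 2 * c) by (unfold dmax; apply Rmax_lub; apply M).
    assert (d <= L * (2 * c)) by (eapply Rle_trans; [exact Lp|]; apply Rmult_le_compat_l; lra).
    lra.
Qed.

(* At a point of K_m the derivative of the orbit map is bounded below by
   [orbit_derivative_lower], while the Cauchy estimate makes the error's derivative small. *)
Lemma close_map_immersion z : in_K m z -> exists l1 l2 : C,
  is_derive (fun w => fst (h w)) z l1 /\ is_derive (fun w => snd (h w)) z l2 /\ (l1, l2) <> (RtoC 0, RtoC 0).
Proof.
  intros Kz. set (L := lam (S m) (eps (S m))) in *. set (r := reach m (eps m)) in *.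
  assert (hr : 0 < r) by apply reach_pos, eps_pos, m_pos.
  assert (Kz' : in_K (S m) z) by (apply (in_K_neighbourhood m z z m_pos Kz); rewrite Cmod_minus_diag; fold r; lra).
  destruct Kz' as [Hav _].
  destruct (orbit_holomorphic (S m) z Hav true) as [m1 M1].
  destruct (orbit_holomorphic (S m) z Hav false) as [m2 M2].
  destruct (error_small true z ltac:(apply (in_K_neighbourhood m z z m_pos Kz); rewrite Cmod_minus_diag; fold r; lra))
    as [[e1 E1] _].
  destruct (error_small false z ltac:(apply (in_K_neighbourhood m z z m_pos Kz); rewrite Cmod_minus_diag; fold r; lra))
    as [[e2 E2] _].
  exists (e1 + m1)%C, (e2 + m2)%C. split; [|split].
  - apply (is_derive_C_ext (fun w => error h (S m) true w + coord true (orb (S m) w))%C);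
      [intros; unfold error; simpl; ring | apply is_derive_C_plus; auto].
  - apply (is_derive_C_ext (fun w => error h (S m) false w + coord false (orb (S m) w))%C);
      [intros; unfold error; simpl; ring | apply is_derive_C_plus; auto].
  - intro E.
    assert (Z1 : (e1 + m1)%C = RtoC 0) by exact (f_equal fst E).
    assert (Z2 : (e2 + m2)%C = RtoC 0) by exact (f_equal snd E).
    assert (Hz : Cmod (z - z) <= r / 2) by (rewrite Cmod_minus_diag; fold r; lra).
    assert (B : forall b e, is_derive (error h (S m) b) z e -> Cmod e <= 16 * c / r).
    { intros b e He. apply (cauchy_near_K m (error h (S m) b) c z z e m_pos Kz Hz); auto. }
    pose proof (B true e1 E1) as B1. pose proof (B false e2 E2) as B2.
    replace e1 with (- m1)%C in B1 by (replace e1 with ((e1 + m1) - m1)%C by ring; rewrite Z1; ring).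
    replace e2 with (- m2)%C in B2 by (replace e2 with ((e2 + m2) - m2)%C by ring; rewrite Z2; ring).
    rewrite Cmod_opp in B1, B2.
    pose proof (orbit_derivative_lower m z m1 m2 m_pos Kz M1 M2) as DL. fold L in DL.
    assert (hL : 1 <= L) by (apply lam_ge_1, eps_pos; lia).
    assert (L * (Cmod m1 + Cmod m2) <= 32 * (L * c) / r).
    { replace (32 * (L * c) / r) with (L * (2 * (16 * c / r))) by (field; lra).
      apply Rmult_le_compat_l; lra. }
    assert (32 * (L * c) / r < 1).
    { apply Rmult_lt_reg_r with r; auto. unfold Rdiv. rewrite Rmult_assoc, Rinv_l by lra. lra. }
    lra.
Qed.

End CloseMaps.

Theorem embedding_of_close m h c : (1 <= m)%nat ->
  lam (S m) (eps (S m)) * c < reach m (eps m) / 64 ->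
  holo_off_poles pole eps (S m) h ->
  (forall z, inK pole eps radius (S m) z ->
     exists p, gamma pole eps (S m) z = Some p /\ norm2 (sub2 p (h z)) <= c) ->
  embedding_on (inK pole eps radius m) h.
Proof.
  intros hm Hc Hh Hclose. pose proof (error_bound m h c Hh Hclose) as Herr.
  split.
  - intros z w Hz Hw. apply (close_map_injective m h c hm Hc Herr); apply in_K_iff; auto.
  - intros z Hz. apply (close_map_immersion m h c hm Hc Herr), in_K_iff; auto.
Qed.

End Orbits.

(** * Choice of the sequences *)

(* delta_{m+1} is constrained by eps_m (through the reach of K_m) and by eps_{m+1}, while
   eps_{m+1} is chosen from delta_m: the pair is defined by a joint recursion. The value
   eps_0 plays no role in the statement; it only has to be positive. *)
Fixpoint delta_eps (n : nat) : R * R :=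
  match n with
  | O => (1 / 4, 1 / 64)
  | S m =>
      let e := fst (delta_eps m) / 4 ^ (S m + 3) in
      (Rmin (fst (delta_eps m) / 2) (reach m (snd (delta_eps m)) / (64 * lam (S m) e)), e)
  end.

Definition delta (n : nat) : R := fst (delta_eps n).
Definition epsilon (n : nat) : R := snd (delta_eps n).

Lemma epsilon_S m : epsilon (S m) = delta m / 4 ^ (S m + 3).
Proof. reflexivity. Qed.

Lemma delta_S m : delta (S m) = Rmin (delta m / 2) (reach m (epsilon m) / (64 * lam (S m) (epsilon (S m)))).
Proof. reflexivity. Qed.

Lemma delta_epsilon_pos n : 0 < delta n /\ 0 < epsilon n /\ delta n <= 1 / 4.
Proof.
  induction n as [|m [h1 [h2 h3]]]; [unfold delta, epsilon; simpl; lra|].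
  assert (0 < 4 ^ (S m + 3)) by (apply pow_lt; lra).
  assert (he : 0 < epsilon (S m)) by (rewrite epsilon_S; apply Rdiv_lt_0_compat; lra).
  rewrite delta_S. split; [|split; auto].
  - apply Rmin_pos; [lra|]. apply Rdiv_lt_0_compat; [apply reach_pos; auto|].
    pose proof (lam_ge_1 (S m) (epsilon (S m)) he). lra.
  - eapply Rle_trans; [apply Rmin_l|]. lra.
Qed.

Lemma delta_decr n : delta (S n) < delta n.
Proof. rewrite delta_S. pose proof (delta_epsilon_pos n). eapply Rle_lt_trans; [apply Rmin_l|]. lra. Qed.

Lemma delta_antitone j m : (j <= m)%nat -> delta m <= delta j.
Proof. induction 1; [lra|]. pose proof (delta_decr m). lra. Qed.

Lemma epsilon_pos k : (1 <= k)%nat -> 0 < epsilon k.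
Proof. intros _. apply delta_epsilon_pos. Qed.

Lemma epsilon_small k : (1 <= k)%nat -> epsilon k <= 1 / (8 * 2 ^ k).
Proof.
  intros hk. destruct k as [|m]; [lia|]. rewrite epsilon_S.
  destruct (delta_epsilon_pos m) as [h1 [_ h3]].
  assert (h2 : 0 < 2 ^ S m) by (apply pow_lt; lra).
  assert (A : 2 ^ S m * 64 <= 4 ^ (S m + 3)).
  { rewrite pow_add. replace (4 ^ 3) with 64 by (simpl; ring).
    apply Rmult_le_compat_r; [lra|]. apply pow_incr; lra. }
  apply Rle_trans with (1 / 4 / (2 ^ S m * 64)).
  - unfold Rdiv. apply Rmult_le_compat; try lra; [left; apply Rinv_0_lt_compat; lra|].
    apply Rinv_le_contravar; lra.
  - unfold Rdiv. rewrite !Rmult_1_l, <- Rinv_mult. apply Rinv_le_contravar; lra.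
Qed.

Lemma epsilon_decr k : (1 <= k)%nat -> epsilon (S k) <= epsilon k.
Proof.
  intros hk. destruct k as [|m]; [lia|]. rewrite !epsilon_S.
  pose proof (delta_decr m). destruct (delta_epsilon_pos (S m)) as [h5 _].
  assert (0 < 4 ^ (S m + 3)) by (apply pow_lt; lra).
  assert (4 ^ (S m + 3) <= 4 ^ (S (S m) + 3)) by (apply Rle_pow; [lra|lia]).
  unfold Rdiv. apply Rmult_le_compat; try lra; [left; apply Rinv_0_lt_compat; lra|].
  apply Rinv_le_contravar; lra.
Qed.

Lemma two_epsilon_lt_delta j n : (j < n)%nat -> 2 * epsilon n < delta j * / 2 ^ (j + n).
Proof.
  intros h. destruct n as [|m]; [lia|]. rewrite epsilon_S.
  destruct (delta_epsilon_pos j) as [h2 _]. pose proof (delta_antitone j m ltac:(lia)).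
  set (N := (S m + 3)%nat). set (K := (j + S m)%nat).
  assert (hK : 0 < 2 ^ K) by (apply pow_lt; lra). assert (hN : 0 < 4 ^ N) by (apply pow_lt; lra).
  assert (P : 2 * 2 ^ K < 4 ^ N).
  { replace 4 with (2 ^ 2) by (simpl; lra). rewrite <- pow_mult.
    change (2 * 2 ^ K) with (2 ^ S K). apply Rlt_pow; [lra|unfold N, K; lia]. }
  assert (Q : 2 / 4 ^ N < / 2 ^ K).
  { apply Rmult_lt_reg_r with (2 ^ K * 4 ^ N); [nra|].
    replace (2 / 4 ^ N * (2 ^ K * 4 ^ N)) with (2 * 2 ^ K) by (field; lra).
    replace (/ 2 ^ K * (2 ^ K * 4 ^ N)) with (4 ^ N) by (field; lra). lra. }
  apply Rle_lt_trans with (delta j * (2 / 4 ^ N)).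
  - replace (2 * (delta m / 4 ^ N)) with (delta m * (2 / 4 ^ N)) by (field; lra).
    apply Rmult_le_compat_r; [left; apply Rdiv_lt_0_compat|]; lra.
  - apply Rmult_lt_compat_l; lra.
Qed.

Lemma epsilon_le_1 n : (1 <= n)%nat -> 0 < epsilon n <= 1.
Proof. intros hn. pose proof (eps_le_eighth epsilon epsilon_small n hn). pose proof (epsilon_pos n hn). lra. Qed.

Lemma delta_controls_embedding m c : c < delta (S m) ->
  lam (S m) (epsilon (S m)) * c < reach m (epsilon m) / 64.
Proof.
  intros Hc. set (L := lam (S m) (epsilon (S m))).
  assert (hL : 1 <= L) by (apply lam_ge_1, epsilon_pos; lia).
  assert (Hd : delta (S m) <= reach m (epsilon m) / (64 * L)) by (rewrite delta_S; apply Rmin_r).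
  apply Rlt_le_trans with (L * delta (S m)); [apply Rmult_lt_compat_l; lra|].
  eapply Rle_trans; [apply Rmult_le_compat_l; [lra|exact Hd]|]. right. field. lra.
Qed.

Lemma closure_ball_bound j z : closure2 (inBnbhd radius j (1 / 2)) z ->
  forall b, Cmod (coord b z) <= 4 * INR j + 1 / 2.
Proof.
  intros Hc b. apply le_epsilon. intros r hr.
  destruct (Hc r hr) as [w [[p [Hp Hwp]] Hzw]].
  assert (Hpb : Cmod (coord b p) <= 4 * INR j).
  { destruct j as [|j']; simpl in Hp.
    - subst p. destruct b; simpl; rewrite Cmod_0; lra.
    - unfold radius in Hp. destruct b, Hp; simpl; auto. }
  pose proof (Cmod_coord_le_norm2 b (sub2 z w)). pose proof (Cmod_coord_le_norm2 b (sub2 w p)).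
  pose proof (Cmod_minus_triangle (coord b z) (coord b w) (coord b p)).
  pose proof (Cmod_minus_ge (coord b z) (coord b p)).
  destruct b; simpl in *; lra.
Qed.

Theorem proposition3p3 :
  exists (a : nat -> C) (eps : nat -> R) (Rs : nat -> R) (delta : nat -> R),
    (* R_0 = 0 (B_0 = {(0,0)} is the bidisk of radius 0) *)
    Rs 0%nat = 0 /\
    (forall n : nat, (1 <= n)%nat -> 0 < eps n /\ 0 < Rs n) /\
    (forall n : nat, (1 <= n)%nat ->
       Rs (n - 1)%nat < Cmod (a n) /\ Cmod (a n) < Rs n) /\
    (forall n : nat, 0 < delta n) /\
    (forall n : nat, delta (S n) < delta n) /\
    delta 0%nat = 1 / 4 /\
    (forall n : nat, (1 <= n)%nat ->
       (forall h : C -> C2,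
          holo_off_poles a eps n h ->
          (exists c, c < delta n /\
             forall z, inK a eps Rs n z ->
               exists p, gamma a eps n z = Some p /\ norm2 (sub2 p (h z)) <= c) ->
          embedding_on (inK a eps Rs (n - 1)) h) /\
       (forall j : nat, (j < n)%nat ->
          exists c, c < delta j * / 2 ^ (j + n) /\
            forall z : C2, closure2 (inBnbhd Rs j (1 / 2)) z ->
              exists q, fmap n (a n) (eps n) z = Some q /\ norm2 (sub2 q z) <= c)).
Proof.
  exists pole, epsilon, radius, delta.
  split; [unfold radius; simpl; ring|].
  split; [intros n hn; split; [apply epsilon_pos, hn|apply radius_pos, hn]|].
  split; [apply pole_between_radii|].
  split; [intros n; apply delta_epsilon_pos|].
  split; [apply delta_decr|].
  split; [reflexivity|].
  intros n hn. split.
  - intros h Hh [c [Hc Hclose]]. destruct n as [|[|m]]; [lia|split; simpl; tauto|].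
    apply (embedding_of_close epsilon epsilon_pos epsilon_small epsilon_decr (S m) h c); auto; [lia|].
    apply delta_controls_embedding, Hc.
  - intros j hj. exists (2 * epsilon n). split; [apply two_epsilon_lt_delta, hj|].
    intros z Hz. apply fmap_moves_little; [exact hn|apply epsilon_le_1, hn|].
    intros b. pose proof (closure_ball_bound j z Hz b).
    assert (INR j <= INR (n - 1)) by (apply le_INR; lia). lra.
Qed.
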